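(* Let $\Omega=(a,b)$, $1<p<\infty$, $k\ge1$, and $m,n$ measurable on $(a,b)$ with $0<\theta_-\le m,n\le\theta_+$. Fix a sign $\pm$, let $s>0$, $(\alpha(s),\beta(s))=(s^{-1}c^\pm_{k+1}(s),c^\pm_{k+1}(s))\in\mathcal{C}^\pm_k(m,n)$, and let $u\in W^{1,p}_0(a,b)$ be a nontrivial weak solution of $-(|u'|^{p-2}u')'=\alpha(s)m(u^+)^{p-1}-\beta(s)n(u^-)^{p-1}$ on $(a,b)$, $u(a)=u(b)=0$. Let $I_+$ be a nodal domain (maximal open interval) of $u$ on which $u>0$ and $I_-$ one on which $u<0$. Then $$\mu_1(I_+)\le C\gamma(s),\qquad \mu_1(I_-)\le Cs\gamma(s),$$ where $C=\frac{\theta_+}{\theta_-}\mu_{k+1}(\Omega)$, $\gamma(s)=1$ for $s\ge1$, $\gamma(s)=s^{-1}$ for $s<1$, $\mu_1(I)$ is the first Dirichlet eigenvalue of the one-dimensional $p$-Laplacian on $I$, and $\mu_{k+1}(\Omega)=\pi_p^p(k+1)^p(b-a)^{-p}$.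
   Context: $u^\pm=\max\{\pm u,0\}$. For an interval $I$ and weight $r$, $\lambda_1(r,I)=\inf\{\int_I|v'|^p/\int_I r|v|^p:\ v\in W^{1,p}_0(I)\setminus\{0\}\}$; $\mu_1(I)=\lambda_1(1,I)=\pi_p^p|I|^{-p}$ with $\pi_p=2(p-1)^{1/p}\int_0^1(1-t^p)^{-1/p}dt$. A partition in $\mathcal{P}_{k+1}$ is $a=t_0<\dots<t_{k+1}=b$, $I_j=(t_{j-1},t_j)$. $c^+_{k+1}(s)=\inf_{\mathcal{P}_{k+1}}\max\big(\{s\lambda_1(m,I_j): j\text{ odd}\}\cup\{\lambda_1(n,I_j): j\text{ even}\}\big)$ and $c^-_{k+1}(s)$ likewise with ''odd'' and ''even'' interchanged. $\mathcal{C}^\pm_k(m,n)$ is the Fučík curve whose eigenfunctions have $k$ interior zeros and positive (resp. negative) slope at $a$; $(s^{-1}c^\pm_{k+1}(s),c^\pm_{k+1}(s))$ is its intersection with the line $\beta=s\alpha$. *)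

From Stdlib Require Import Reals Lra List Arith.
Open Scope R_scope.

(* A McShane delta-fine division of [lo,hi]: consecutive intervals [x,y]
   covering [lo,hi], each with a tag t in [lo,hi] such that
   [x,y] is contained in (t - delta t, t + delta t).  McDiv lo hi d x P means
   P is such a division of [x,hi]. *)
Inductive McDiv (lo hi : R) (delta : R -> R) : R -> list (R * R * R) -> Prop :=
| md_nil : McDiv lo hi delta hi nil
| md_cons : forall x y t P,
    x < y -> lo <= t <= hi -> t - delta t < x -> y < t + delta t ->
    McDiv lo hi delta y P -> McDiv lo hi delta x ((x, y, t) :: P).

Definition rsum (f : R -> R) (P : list (R * R * R)) : R :=
  fold_right (fun xyt acc => let '(x, y, t) := xyt in f t * (y - x) + acc) 0 P.

(* The McShane integral of f over [a,b] (a < b) equals I.  On compact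
   intervals the McShane integral coincides with the Lebesgue integral. *)
Definition McShane_int (f : R -> R) (a b I : R) : Prop :=
  a < b /\
  forall eps, 0 < eps -> exists delta : R -> R, (forall t, 0 < delta t) /\
    forall P, McDiv a b delta a P -> Rabs (rsum f P - I) < eps.

Definition integrable (f : R -> R) (a b : R) : Prop := exists I, McShane_int f a b I.

(* Lebesgue measurability on [a,b]: every bounded truncation is integrable. *)
Definition measurable_on (f : R -> R) (a b : R) : Prop :=
  forall N, 0 < N -> integrable (fun x => Rmax (- N) (Rmin N (f x))) a b.

(* |x|^e convention: pw x e = x^e for x > 0, and 0 for x <= 0. *)
Definition pw (x e : R) : R := if Rle_dec x 0 then 0 else Rpower x e.

Definition pos_part (x : R) : R := Rmax x 0.
Definition neg_part (x : R) : R := Rmax (- x) 0.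

(* phi_p(x) = |x|^(p-2) x *)
Definition phip (p x : R) : R :=
  if Rlt_dec x 0 then - pw (- x) (p - 1) else pw x (p - 1).

(* v (its continuous representative) lies in W^{1,p}_0(c,d) with weak
   derivative g: g in L^p(c,d), v(x) = int_c^x g, v(c) = v(d) = 0. *)
Definition W0 (p c d : R) (v g : R -> R) : Prop :=
  c < d /\
  measurable_on g c d /\
  integrable (fun x => pw (Rabs (g x)) p) c d /\
  v c = 0 /\
  (forall x, c < x <= d -> McShane_int g c x (v x)) /\
  v d = 0.

Definition nontrivial_on (c d : R) (v : R -> R) : Prop :=
  exists x, c < x < d /\ v x <> 0.

Definition RQ (p : R) (r : R -> R) (c d : R) (q : R) : Prop :=
  exists v g A B, W0 p c d v g /\ nontrivial_on c d v /\
    McShane_int (fun x => pw (Rabs (g x)) p) c d A /\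
    McShane_int (fun x => r x * pw (Rabs (v x)) p) c d B /\
    q = A / B.

Definition is_inf (S : R -> Prop) (L : R) : Prop :=
  (forall q, S q -> L <= q) /\ (forall L', (forall q, S q -> L' <= q) -> L' <= L).

Definition is_lambda1 (p : R) (r : R -> R) (c d L : R) : Prop := is_inf (RQ p r c d) L.

Definition is_mu1 (p c d L : R) : Prop := is_lambda1 p (fun _ => 1) c d L.

Definition is_pi_p (p P : R) : Prop :=
  exists J, McShane_int (fun t => pw (1 - pw t p) (- (1 / p))) 0 1 J /\
            P = 2 * Rpower (p - 1) (1 / p) * J.

Definition is_partition (k : nat) (a b : R) (t : nat -> R) : Prop :=
  t 0%nat = a /\ t (S k) = b /\ (forall i, (i <= k)%nat -> t i < t (S i)).

(* sg = true : "+" (odd j -> s*lambda_1(m,I_j), even j -> lambda_1(n,I_j));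
   sg = false: "-" (odd and even interchanged). *)
Definition cw_coef (sg : bool) (s : R) (j : nat) : R :=
  if Bool.eqb (Nat.odd j) sg then s else 1.
Definition cw_weight (sg : bool) (m n : R -> R) (j : nat) : R -> R :=
  if Bool.eqb (Nat.odd j) sg then m else n.

Definition partition_value (p : R) (sg : bool) (s : R) (m n : R -> R) (k : nat)
    (t : nat -> R) (V : R) : Prop :=
  exists L : nat -> R,
    (forall j, (1 <= j <= S k)%nat ->
       is_lambda1 p (cw_weight sg m n j) (t (pred j)) (t j) (L j)) /\
    (forall j, (1 <= j <= S k)%nat -> cw_coef sg s j * L j <= V) /\
    (exists j, (1 <= j <= S k)%nat /\ V = cw_coef sg s j * L j).

Definition is_c (p : R) (sg : bool) (s : R) (m n : R -> R) (k : nat) (a b c : R) : Prop :=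
  is_inf (fun V => exists t, is_partition k a b t /\ partition_value p sg s m n k t V) c.

Definition weak_solution (p al be : R) (m n : R -> R) (a b : R) (u g : R -> R) : Prop :=
  W0 p a b u g /\
  forall phi psi, W0 p a b phi psi ->
    exists J,
      McShane_int (fun x => phip p (g x) * psi x) a b J /\
      McShane_int (fun x => (al * m x * pw (pos_part (u x)) (p - 1)
                             - be * n x * pw (neg_part (u x)) (p - 1)) * phi x) a b J.

Definition pos_nodal (a b : R) (u : R -> R) (c d : R) : Prop :=
  a <= c /\ c < d /\ d <= b /\ (forall x, c < x < d -> 0 < u x) /\
  ~ (0 < u c) /\ ~ (0 < u d).
Definition neg_nodal (a b : R) (u : R -> R) (c d : R) : Prop :=
  a <= c /\ c < d /\ d <= b /\ (forall x, c < x < d -> u x < 0) /\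
  ~ (u c < 0) /\ ~ (u d < 0).

Definition gamma (s : R) : R := if Rle_dec 1 s then 1 else / s.

(* Testing the equation with [u] restricted to a nodal domain [I] gives
   [int_I |u'|^p = int_I (alpha m (u^+)^(p-1) - beta n (u^-)^(p-1)) u], which is at
   most [theta_+ alpha int_I |u|^p] on a positive domain and
   [theta_+ beta int_I |u|^p] on a negative one; hence [mu_1(I_+) <= theta_+ c / s]
   and [mu_1(I_-) <= theta_+ c].  On the other hand [c] is at most the value of its
   minimax on the partition of [(a, b)] into [k + 1] equal intervals [J], and for a
   weight [r >= theta_-] truncated p-sine test functions give
   [lambda_1(r, J) <= pi_p^p |J|^(-p) / theta_-], so that
   [c <= max(s, 1) mu_(k+1)(a, b) / theta_-]. *)

From Stdlib Require Import Reals Lra Lia List Classical ClassicalChoice.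
From Coquelicot Require Import Coquelicot.
Open Scope R_scope.
Set Bullet Behavior "Strict Subproofs".

(** * Gauge-fine divisions and Riemann sums *)

(* [fine_div lo hi d x z P]: [P] is a [d]-fine tagged division of [[x, z]] with
   tags in [[lo, hi]]; [McDiv lo hi d x P] is the case [z = hi]. *)
Inductive fine_div (lo hi : R) (d : R -> R) : R -> R -> list (R * R * R) -> Prop :=
| fine_div_nil : forall z, fine_div lo hi d z z nil
| fine_div_cons : forall x y z t P, x < y -> lo <= t <= hi -> t - d t < x -> y < t + d t ->
    fine_div lo hi d y z P -> fine_div lo hi d x z ((x, y, t) :: P).

Lemma McDiv_fine_div lo hi d x P : McDiv lo hi d x P -> fine_div lo hi d x hi P.
Proof. induction 1; econstructor; eauto. Qed.

Lemma fine_div_McDiv lo hi d x P : fine_div lo hi d x hi P -> McDiv lo hi d x P.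
Proof.
  assert (G : forall z, fine_div lo hi d x z P -> z = hi -> McDiv lo hi d x P).
  { intros z H. induction H; intros; subst; [constructor|econstructor; eauto]. }
  intros H; eapply G; eauto.
Qed.

Lemma fine_div_le lo hi d x z P : fine_div lo hi d x z P -> x <= z.
Proof. induction 1; lra. Qed.

Lemma fine_div_app lo hi d x y z P1 P2 :
  fine_div lo hi d x y P1 -> fine_div lo hi d y z P2 -> fine_div lo hi d x z (P1 ++ P2).
Proof. induction 1; intros; simpl; auto. econstructor; eauto. Qed.

Lemma fine_div_widen lo hi lo' hi' d x z P :
  lo' <= lo -> hi <= hi' -> fine_div lo hi d x z P -> fine_div lo' hi' d x z P.
Proof. intros H1 H2; induction 1; econstructor; eauto; lra. Qed.

Lemma fine_div_gauge_le lo hi d d' x z P : (forall t, lo <= t <= hi -> d t <= d' t) ->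
  fine_div lo hi d x z P -> fine_div lo hi d' x z P.
Proof. intros Hd; induction 1; econstructor; eauto; specialize (Hd t H0); lra. Qed.

Definition gauge_min (d1 d2 : R -> R) : R -> R := fun t => Rmin (d1 t) (d2 t).

Lemma gauge_min_pos d1 d2 : (forall t, 0 < d1 t) -> (forall t, 0 < d2 t) ->
  forall t, 0 < gauge_min d1 d2 t.
Proof. intros; unfold gauge_min; apply Rmin_glb_lt; auto. Qed.

Lemma fine_div_gauge_min_l lo hi d1 d2 x z P :
  fine_div lo hi (gauge_min d1 d2) x z P -> fine_div lo hi d1 x z P.
Proof. apply fine_div_gauge_le. intros; apply Rmin_l. Qed.

Lemma fine_div_gauge_min_r lo hi d1 d2 x z P :
  fine_div lo hi (gauge_min d1 d2) x z P -> fine_div lo hi d2 x z P.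
Proof. apply fine_div_gauge_le. intros; apply Rmin_r. Qed.

(* Cousin's lemma: take the infimum [z] of the points [x] such that [[x, hi]]
   has a fine division; a single tagged interval with tag [z] extends such a
   division below [z], so [z = lo]. *)
Lemma cousin lo hi d : (forall t, 0 < d t) -> lo <= hi -> exists P, fine_div lo hi d lo hi P.
Proof.
  intros Hd Hlh.
  set (T := fun x => lo <= x <= hi /\ exists P, fine_div lo hi d x hi P).
  set (E := fun y => T (- y)).
  assert (HhiT : T hi) by (split; [lra|exists nil; constructor]).
  assert (HE : bound E) by (exists (- lo); intros y [Hy _]; lra).
  assert (HE2 : exists y, E y) by (exists (- hi); unfold E; rewrite Ropp_involutive; auto).
  destruct (completeness E HE HE2) as [m [Hub Hlub]].
  set (z := - m).
  assert (Hz : lo <= z <= hi).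
  { assert (m <= - lo) by (apply Hlub; intros y [Hy _]; lra).
    assert (- hi <= m) by (apply Hub; unfold E; rewrite Ropp_involutive; auto).
    unfold z; lra. }
  assert (Hdz : 0 < d z) by auto.
  assert (HTz : T z).
  { assert (Hy : exists y, T y /\ y < z + d z).
    { apply not_all_not_ex. intros Hn.
      assert (m <= - (z + d z)).
      { apply Hlub. intros y Ey. destruct (Rle_or_lt y (- (z + d z))); auto.
        exfalso. apply (Hn (- y)). split; [exact Ey|lra]. }
      unfold z in *; lra. }
    destruct Hy as [y [[Hy1 [P HP]] Hy2]].
    assert (z <= y).
    { assert (- y <= m) by (apply Hub; unfold E; rewrite Ropp_involutive; split; eauto). unfold z; lra. }
    destruct (Req_dec z y) as [->|Hne]; [split; eauto|].
    split; auto. exists ((z, y, z) :: P). econstructor; eauto; lra. }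
  destruct (Req_dec z lo) as [Heq|Hne].
  - destruct HTz as [_ [P HP]]. exists P. rewrite Heq in HP. exact HP.
  - exfalso. set (x := Rmax lo (z - d z / 2)).
    assert (Hx : lo <= x < z) by (unfold x; split; [apply Rmax_l|apply Rmax_lub_lt; lra]).
    assert (HTx : T x).
    { destruct HTz as [_ [P HP]]. split; [lra|]. exists ((x, z, z) :: P). econstructor; eauto; try lra.
      unfold x. apply Rlt_le_trans with (z - d z / 2); [lra|apply Rmax_r]. }
    assert (- x <= m) by (apply Hub; unfold E; rewrite Ropp_involutive; auto).
    unfold z in *; lra.
Qed.

Lemma cousin_sub lo hi d x z : (forall t, 0 < d t) -> lo <= x -> x <= z -> z <= hi ->
  exists P, fine_div lo hi d x z P.
Proof.
  intros Hd H1 H2 H3. destruct (cousin x z d Hd H2) as [P HP]. exists P. eapply fine_div_widen; eauto.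
Qed.

Lemma rsum_nil f : rsum f nil = 0.
Proof. reflexivity. Qed.

Lemma rsum_cons f x y t P : rsum f ((x, y, t) :: P) = f t * (y - x) + rsum f P.
Proof. reflexivity. Qed.

Lemma rsum_app f P1 P2 : rsum f (P1 ++ P2) = rsum f P1 + rsum f P2.
Proof. induction P1 as [|[[x y] t] P IH]; [simpl; lra|]. rewrite <- app_comm_cons, !rsum_cons, IH. ring. Qed.

Lemma rsum_minus f g P : rsum (fun x => f x - g x) P = rsum f P - rsum g P.
Proof. induction P as [|[[x y] t] P IH]; [unfold rsum; simpl; ring|]. rewrite !rsum_cons, IH. ring. Qed.

Lemma rsum_scal c f P : rsum (fun x => c * f x) P = c * rsum f P.
Proof. induction P as [|[[x y] t] P IH]; [unfold rsum; simpl; ring|]. rewrite !rsum_cons, IH. ring. Qed.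

Section RiemannSums.
Variables (lo hi : R) (d : R -> R).

Lemma rsum_const x z P c : fine_div lo hi d x z P -> rsum (fun _ => c) P = c * (z - x).
Proof. induction 1; [unfold rsum; simpl; ring|]. rewrite rsum_cons, IHfine_div. ring. Qed.

Lemma rsum_ext x z P f g : fine_div lo hi d x z P ->
  (forall t, lo <= t <= hi -> f t = g t) -> rsum f P = rsum g P.
Proof. intros H Hf. induction H; [reflexivity|]. rewrite !rsum_cons, (Hf t H0), IHfine_div; auto. Qed.

Lemma rsum_le x z P f g : fine_div lo hi d x z P ->
  (forall t, lo <= t <= hi -> f t <= g t) -> rsum f P <= rsum g P.
Proof.
  intros H Hf. induction H; [rewrite !rsum_nil; lra|].
  rewrite !rsum_cons. specialize (Hf t H0).
  assert (f t * (y - x) <= g t * (y - x)) by (apply Rmult_le_compat_r; lra). lra.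
Qed.

Lemma rsum_abs_le x z P f M : fine_div lo hi d x z P ->
  (forall t, lo <= t <= hi -> Rabs (f t) <= M) -> Rabs (rsum f P) <= M * (z - x).
Proof.
  intros H Hf. induction H.
  - rewrite rsum_nil, Rabs_R0, Rminus_diag, Rmult_0_r; lra.
  - rewrite rsum_cons. specialize (Hf t H0).
    eapply Rle_trans; [apply Rabs_triang|]. rewrite Rabs_mult, (Rabs_right (y - x)) by lra.
    assert (Rabs (f t) * (y - x) <= M * (y - x)) by (apply Rmult_le_compat_r; lra). lra.
Qed.

End RiemannSums.

(** * The McShane integral *)

Lemma McShane_int_intro f a b I : a < b ->
  (forall eps, 0 < eps -> exists d, (forall t, 0 < d t) /\
     forall P, fine_div a b d a b P -> Rabs (rsum f P - I) < eps) ->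
  McShane_int f a b I.
Proof.
  intros Hab H. split; auto. intros eps He. destruct (H eps He) as [d [Hd HP]].
  exists d. split; auto. intros P HP'. apply HP, McDiv_fine_div; auto.
Qed.

Lemma McShane_int_elim f a b I : McShane_int f a b I ->
  forall eps, 0 < eps -> exists d, (forall t, 0 < d t) /\
    forall P, fine_div a b d a b P -> Rabs (rsum f P - I) < eps.
Proof.
  intros [Hab H] eps He. destruct (H eps He) as [d [Hd HP]].
  exists d. split; auto. intros P HP'. apply HP, fine_div_McDiv; auto.
Qed.

Lemma McShane_int_lt f a b I : McShane_int f a b I -> a < b.
Proof. intros [H _]; auto. Qed.

Lemma McShane_int_common_div f g a b I K eps : McShane_int f a b I -> McShane_int g a b K ->
  0 < eps -> exists d P, fine_div a b d a b P /\
    Rabs (rsum f P - I) < eps /\ Rabs (rsum g P - K) < eps.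
Proof.
  intros H1 H2 He. pose proof (McShane_int_lt _ _ _ _ H1) as Hab.
  destruct (McShane_int_elim _ _ _ _ H1 eps He) as [d1 [Hd1 P1]].
  destruct (McShane_int_elim _ _ _ _ H2 eps He) as [d2 [Hd2 P2]].
  destruct (cousin a b (gauge_min d1 d2) (gauge_min_pos _ _ Hd1 Hd2) ltac:(lra)) as [P HP].
  exists (gauge_min d1 d2), P. split; [exact HP|split].
  - apply P1. eapply fine_div_gauge_min_l; eauto.
  - apply P2. eapply fine_div_gauge_min_r; eauto.
Qed.

Lemma McShane_int_le f g a b I K : McShane_int f a b I -> McShane_int g a b K ->
  (forall t, a <= t <= b -> f t <= g t) -> I <= K.
Proof.
  intros H1 H2 Hfg. destruct (Rle_or_lt I K) as [|Hlt]; auto. exfalso.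
  destruct (McShane_int_common_div _ _ _ _ _ _ ((I - K) / 2) H1 H2) as [d [P [HP [E1 E2]]]]; [lra|].
  pose proof (rsum_le _ _ _ _ _ _ f g HP Hfg).
  apply Rabs_def2 in E1. apply Rabs_def2 in E2. lra.
Qed.

Lemma McShane_int_unique f a b I1 I2 : McShane_int f a b I1 -> McShane_int f a b I2 -> I1 = I2.
Proof.
  intros H1 H2. apply Rle_antisym; eapply McShane_int_le; eauto; intros; lra.
Qed.

Lemma McShane_int_ext f g a b I : McShane_int f a b I ->
  (forall t, a <= t <= b -> f t = g t) -> McShane_int g a b I.
Proof.
  intros H Hfg. apply McShane_int_intro; [exact (McShane_int_lt _ _ _ _ H)|]. intros e He.
  destruct (McShane_int_elim _ _ _ _ H e He) as [d [Hd HP]]. exists d; split; auto.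
  intros P HP'. rewrite <- (rsum_ext _ _ _ _ _ _ f g HP' Hfg). auto.
Qed.

Lemma McShane_int_scal c f a b I : McShane_int f a b I -> McShane_int (fun x => c * f x) a b (c * I).
Proof.
  intros H. apply McShane_int_intro; [exact (McShane_int_lt _ _ _ _ H)|]. intros e He.
  assert (Hc : 0 < Rabs c + 1) by (pose proof (Rabs_pos c); lra).
  destruct (McShane_int_elim _ _ _ _ H (e / (Rabs c + 1))) as [d [Hd HP]].
  { apply Rdiv_lt_0_compat; auto. }
  exists d. split; auto. intros P HP'. rewrite rsum_scal.
  replace (c * rsum f P - c * I) with (c * (rsum f P - I)) by ring. rewrite Rabs_mult.
  specialize (HP P HP'). pose proof (Rabs_pos (rsum f P - I)).
  apply Rle_lt_trans with ((Rabs c + 1) * Rabs (rsum f P - I)); [nra|].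
  apply Rmult_lt_compat_l with (r := Rabs c + 1) in HP; [|lra].
  replace ((Rabs c + 1) * (e / (Rabs c + 1))) with e in HP by (field; lra). lra.
Qed.

Lemma McShane_int_const c a b : a < b -> McShane_int (fun _ => c) a b (c * (b - a)).
Proof.
  intros Hab. apply McShane_int_intro; auto. intros e He. exists (fun _ => 1). split; [intros; lra|].
  intros P HP. rewrite (rsum_const _ _ _ _ _ _ c HP), Rminus_diag, Rabs_R0. auto.
Qed.

Lemma McShane_int_ge0 f a b I : McShane_int f a b I -> (forall t, a <= t <= b -> 0 <= f t) -> 0 <= I.
Proof.
  intros H Hf. pose proof (McShane_int_const 0 a b (McShane_int_lt _ _ _ _ H)).
  replace 0 with (0 * (b - a)) by ring. eapply McShane_int_le; eauto.
Qed.

Fixpoint gauge_min_upto (ds : nat -> R -> R) (n : nat) : R -> R :=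
  match n with O => ds O | S n' => gauge_min (gauge_min_upto ds n') (ds n) end.

Lemma gauge_min_upto_pos ds : (forall n t, 0 < ds n t) -> forall n t, 0 < gauge_min_upto ds n t.
Proof. intros H n; induction n; simpl; intros; auto. apply gauge_min_pos; auto. Qed.

Lemma gauge_min_upto_le ds n m t : (n <= m)%nat -> gauge_min_upto ds m t <= ds n t.
Proof.
  intros Hnm. induction Hnm.
  - destruct n; simpl; [lra|]. apply Rmin_r.
  - simpl. unfold gauge_min. eapply Rle_trans; [apply Rmin_l|auto].
Qed.

Lemma Rinv_INR_S_lt eps : 0 < eps -> exists N, / INR (S N) < eps.
Proof.
  intros He. destruct (archimed_cor1 eps He) as [N [HN1 HN2]].
  exists N. eapply Rle_lt_trans; [|apply HN1].
  apply Rinv_le_contravar; [apply lt_0_INR; lia|apply le_INR; lia].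
Qed.

(* Cauchy criterion: the sums over divisions fine for the [n]-th gauge, made
   decreasing in [n], form a Cauchy sequence whose limit is the integral. *)
Lemma integrable_cauchy f a b : a < b ->
  (forall eps, 0 < eps -> exists d, (forall t, 0 < d t) /\
     forall P Q, fine_div a b d a b P -> fine_div a b d a b Q -> Rabs (rsum f P - rsum f Q) < eps) ->
  integrable f a b.
Proof.
  intros Hab Hc.
  assert (Hc' : forall n : nat, exists d, (forall t, 0 < d t) /\ forall P Q,
      fine_div a b d a b P -> fine_div a b d a b Q -> Rabs (rsum f P - rsum f Q) < / INR (S n)).
  { intros n. apply Hc, Rinv_0_lt_compat, lt_0_INR. lia. }
  destruct (choice _ Hc') as [ds Hds].
  assert (Hpos : forall n t, 0 < ds n t) by (intros n; destruct (Hds n); auto).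
  assert (HP : forall n, exists P, fine_div a b (gauge_min_upto ds n) a b P).
  { intros n. apply cousin; [apply gauge_min_upto_pos; auto|lra]. }
  destruct (choice _ HP) as [Ps HPs].
  set (s := fun n => rsum f (Ps n)).
  assert (Hfine : forall n m, (n <= m)%nat -> fine_div a b (ds n) a b (Ps m)).
  { intros n m Hnm. eapply fine_div_gauge_le; [|apply HPs]. intros; apply gauge_min_upto_le; auto. }
  assert (Hcs : forall n m, (n <= m)%nat -> Rabs (s m - s n) < / INR (S n)).
  { intros n m Hnm. destruct (Hds n) as [_ Hq]. apply Hq; apply Hfine; auto. }
  assert (Hcc : Cauchy_crit s).
  { intros e He. destruct (Rinv_INR_S_lt (e / 2) ltac:(lra)) as [N HN].
    exists N. intros n m Hn Hm. unfold R_dist.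
    pose proof (Hcs N m Hm) as A1. pose proof (Hcs N n Hn) as A2.
    apply Rabs_def2 in A1. apply Rabs_def2 in A2. apply Rabs_def1; lra. }
  destruct (Rcomplete.R_complete s Hcc) as [I HI]. exists I.
  apply McShane_int_intro; auto. intros e He.
  destruct (Rinv_INR_S_lt (e / 2) ltac:(lra)) as [N HN].
  exists (ds N). split; auto. intros P HP'.
  destruct (HI (e / 2) ltac:(lra)) as [M HM].
  set (m := Nat.max N M). specialize (HM m ltac:(unfold m; lia)). unfold R_dist in HM.
  destruct (Hds N) as [_ Hq]. specialize (Hq P (Ps m) HP' (Hfine N m ltac:(unfold m; lia))).
  fold (s m) in Hq. apply Rabs_def2 in Hq. apply Rabs_def2 in HM. apply Rabs_def1; lra.
Qed.

Lemma integrable_sub f a b I c d : McShane_int f a b I -> a <= c -> c < d -> d <= b ->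
  integrable f c d.
Proof.
  intros H Hac Hcd Hdb. apply integrable_cauchy; auto. intros e He.
  destruct (McShane_int_elim _ _ _ _ H (e / 2) ltac:(lra)) as [dl [Hdl HP]].
  exists dl. split; auto. intros P Q HPf HQf.
  destruct (cousin_sub a b dl a c Hdl ltac:(lra) ltac:(lra) ltac:(lra)) as [D1 HD1].
  destruct (cousin_sub a b dl d b Hdl ltac:(lra) ltac:(lra) ltac:(lra)) as [D3 HD3].
  assert (G : forall R, fine_div c d dl c d R -> fine_div a b dl a b (D1 ++ R ++ D3)).
  { intros R HR. eapply fine_div_app; eauto. eapply fine_div_app; eauto.
    eapply fine_div_widen; [| |eauto]; lra. }
  pose proof (HP _ (G P HPf)) as A1. pose proof (HP _ (G Q HQf)) as A2.
  rewrite !rsum_app in A1, A2. apply Rabs_def2 in A1. apply Rabs_def2 in A2. apply Rabs_def1; lra.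
Qed.

Section Concatenation.
Variables (a b c : R) (d1 d2 : R -> R).

(* A gauge forcing every tagged interval not containing [c] to lie on one side of
   [c], and every interval containing [c] to be tagged at [c]. *)
Definition gauge_split : R -> R := fun t =>
  if Rlt_dec t c then Rmin (d1 t) (c - t)
  else if Rlt_dec c t then Rmin (d2 t) (t - c) else Rmin (d1 t) (d2 t).

Lemma gauge_split_pos : (forall t, 0 < d1 t) -> (forall t, 0 < d2 t) -> forall t, 0 < gauge_split t.
Proof.
  intros H1 H2 t. unfold gauge_split. destruct (Rlt_dec t c); [apply Rmin_glb_lt; auto; lra|].
  destruct (Rlt_dec c t); apply Rmin_glb_lt; auto; lra.
Qed.

Lemma gauge_split_left t : t <= c -> gauge_split t <= d1 t /\ (t < c -> gauge_split t <= c - t).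
Proof.
  intros Ht. unfold gauge_split. destruct (Rlt_dec t c).
  - split; [apply Rmin_l|intros; apply Rmin_r].
  - destruct (Rlt_dec c t); [lra|]. split; [apply Rmin_l|lra].
Qed.

Lemma gauge_split_right t : c <= t -> gauge_split t <= d2 t /\ (c < t -> gauge_split t <= t - c).
Proof.
  intros Ht. unfold gauge_split. destruct (Rlt_dec t c); [lra|]. destruct (Rlt_dec c t).
  - split; [apply Rmin_l|intros; apply Rmin_r].
  - split; [apply Rmin_r|lra].
Qed.

Lemma fine_div_split_right x z P : fine_div a b gauge_split x z P -> c <= x -> fine_div c b d2 x z P.
Proof.
  intros H. induction H; intros Hx; [constructor|].
  assert (Ht : c <= t).
  { destruct (Rlt_le_dec t c) as [Hl|]; auto. destruct (gauge_split_left t) as [_ Hs]; [lra|].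
    specialize (Hs Hl). lra. }
  destruct (gauge_split_right t Ht) as [Hs _].
  econstructor; eauto; try lra. apply IHfine_div. lra.
Qed.

Lemma fine_div_split f x z P : a <= c -> c <= b -> fine_div a b gauge_split x z P -> x <= c -> c <= z ->
  exists P1 P2, fine_div a c d1 x c P1 /\ fine_div c b d2 c z P2 /\ rsum f P = rsum f P1 + rsum f P2.
Proof.
  intros Hac Hcb H. induction H; intros Hx Hcz.
  - exists nil, nil. assert (z = c) by lra. subst.
    split; [constructor|split; [constructor|]]. rewrite rsum_nil; ring.
  - destruct (Rle_lt_dec y c) as [Hyc|Hyc].
    + assert (Ht : t <= c).
      { destruct (Rle_lt_dec t c) as [|Hl]; auto. destruct (gauge_split_right t) as [_ Hs]; lra. }
      destruct (gauge_split_left t Ht) as [Hs _].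
      destruct (IHfine_div Hyc Hcz) as [P1 [P2 [HP1 [HP2 Hsum]]]].
      exists ((x, y, t) :: P1), P2. split; [econstructor; eauto; lra|split; auto].
      rewrite !rsum_cons, Hsum. ring.
    + destruct (Req_dec x c) as [->|Nxc].
      * exists nil, ((c, y, t) :: P). split; [constructor|split].
        -- apply fine_div_split_right; [econstructor; eauto|lra].
        -- rewrite rsum_nil. ring.
      * assert (Ht : t = c).
        { destruct (Rtotal_order t c) as [Hl|[Hl|Hl]]; auto.
          - destruct (gauge_split_left t) as [_ Hs]; lra.
          - destruct (gauge_split_right t) as [_ Hs]; lra. }
        subst t. destruct (gauge_split_left c) as [Hs1 _]; [lra|].
        destruct (gauge_split_right c) as [Hs2 _]; [lra|].
        exists ((x, c, c) :: nil), ((c, y, c) :: P). split; [|split].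
        -- econstructor; try lra. constructor.
        -- econstructor; try lra. apply fine_div_split_right; auto. lra.
        -- rewrite !rsum_cons, rsum_nil. ring.
Qed.

End Concatenation.

Lemma McShane_int_chasles f a c b I1 I2 : McShane_int f a c I1 -> McShane_int f c b I2 ->
  McShane_int f a b (I1 + I2).
Proof.
  intros H1 H2. pose proof (McShane_int_lt _ _ _ _ H1). pose proof (McShane_int_lt _ _ _ _ H2).
  apply McShane_int_intro; [lra|]. intros e He.
  destruct (McShane_int_elim _ _ _ _ H1 (e / 2) ltac:(lra)) as [d1 [Hd1 P1]].
  destruct (McShane_int_elim _ _ _ _ H2 (e / 2) ltac:(lra)) as [d2 [Hd2 P2]].
  exists (gauge_split c d1 d2). split; [apply (gauge_split_pos c d1 d2); auto|]. intros P HP.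
  destruct (fine_div_split a b c d1 d2 f a b P ltac:(lra) ltac:(lra) HP ltac:(lra) ltac:(lra))
    as [Q1 [Q2 [HQ1 [HQ2 Hs]]]].
  specialize (P1 Q1 HQ1). specialize (P2 Q2 HQ2). rewrite Hs.
  apply Rabs_def2 in P1. apply Rabs_def2 in P2. apply Rabs_def1; lra.
Qed.

Lemma McShane_int_split f a c b I : McShane_int f a b I -> a < c -> c < b ->
  exists I1 I2, McShane_int f a c I1 /\ McShane_int f c b I2 /\ I = I1 + I2.
Proof.
  intros H Hac Hcb. destruct (integrable_sub _ _ _ _ a c H) as [I1 H1]; try lra.
  destruct (integrable_sub _ _ _ _ c b H) as [I2 H2]; try lra.
  exists I1, I2. split; auto. split; auto.
  eapply McShane_int_unique; [exact H|]. apply McShane_int_chasles with c; auto.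
Qed.

Lemma McShane_int_diff f a x y Ix Iy : McShane_int f a x Ix -> McShane_int f a y Iy -> x < y ->
  McShane_int f x y (Iy - Ix).
Proof.
  intros Hx Hy Hxy. pose proof (McShane_int_lt _ _ _ _ Hx).
  destruct (McShane_int_split _ _ x _ _ Hy) as [I1 [I2 [A1 [A2 E]]]]; auto.
  rewrite (McShane_int_unique _ _ _ _ _ Hx A1). replace (Iy - I1) with I2 by lra. auto.
Qed.

Fixpoint tagged_length (z : R) (P : list (R * R * R)) : R :=
  match P with
  | nil => 0
  | (x, y, t) :: P' => (if Req_dec_T t z then y - x else 0) + tagged_length z P'
  end.

Lemma rsum_diff_tagged_length lo hi d x w P f h z : fine_div lo hi d x w P ->
  (forall t, lo <= t <= hi -> t <> z -> f t = h t) ->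
  rsum f P - rsum h P = (f z - h z) * tagged_length z P.
Proof.
  intros H Hf. induction H; [unfold rsum; simpl; ring|].
  rewrite !rsum_cons. simpl. destruct (Req_dec_T t z) as [E|E].
  - subst. rewrite Rmult_plus_distr_l, <- IHfine_div. ring.
  - rewrite (Hf t H0 E), Rplus_0_l, <- IHfine_div. ring.
Qed.

Lemma tagged_length_bounds lo hi d x w P z eta : fine_div lo hi d x w P -> 0 <= d z <= eta ->
  0 <= tagged_length z P <= 2 * eta.
Proof.
  intros H [Hd He].
  (* The intervals tagged at [z] are disjoint subintervals of [(max x (z - eta), z + eta)]. *)
  assert (G : tagged_length z P <= Rmax 0 (z + eta - Rmax x (z - eta))).
  { induction H; simpl; [unfold Rmax; repeat destruct Rle_dec; lra|].
    destruct (Req_dec_T t z); [subst|]; revert IHfine_div; unfold Rmax; repeat destruct Rle_dec; lra. }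
  split; [|eapply Rle_trans; [exact G|]; unfold Rmax; repeat destruct Rle_dec; lra].
  clear G. induction H; simpl; [lra|]. destruct (Req_dec_T t z); lra.
Qed.

(* The intervals tagged at [z] can be made arbitrarily short. *)
Lemma McShane_int_change_point f h lo hi z I : McShane_int h lo hi I ->
  (forall t, lo <= t <= hi -> t <> z -> f t = h t) -> McShane_int f lo hi I.
Proof.
  intros H Hfh. apply McShane_int_intro; [exact (McShane_int_lt _ _ _ _ H)|]. intros e He.
  destruct (McShane_int_elim _ _ _ _ H (e / 2) ltac:(lra)) as [d [Hd HP]].
  assert (Hc : 0 < Rabs (f z - h z) + 1) by (pose proof (Rabs_pos (f z - h z)); lra).
  set (eta := e / (4 * (Rabs (f z - h z) + 1))).
  assert (Heta : 0 < eta) by (unfold eta; apply Rdiv_lt_0_compat; lra).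
  exists (fun t => if Req_dec_T t z then Rmin (d t) eta else d t). split.
  { intros t. destruct (Req_dec_T t z); auto. apply Rmin_glb_lt; auto. }
  intros P HPf.
  assert (HP1 : fine_div lo hi d lo hi P).
  { eapply fine_div_gauge_le; [|exact HPf]. intros t _. cbv beta.
    destruct (Req_dec_T t z); [apply Rmin_l|lra]. }
  specialize (HP P HP1).
  pose proof (rsum_diff_tagged_length _ _ _ _ _ _ f h z HPf Hfh) as E.
  destruct (tagged_length_bounds _ _ _ _ _ _ z eta HPf) as [L0 L1].
  { cbv beta. destruct (Req_dec_T z z) as [_|]; [|congruence].
    split; [apply Rlt_le, Rmin_glb_lt; auto|apply Rmin_r]. }
  assert (Hb : Rabs ((f z - h z) * tagged_length z P) <= e / 2).
  { rewrite Rabs_mult, (Rabs_right (tagged_length z P)) by lra.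
    apply Rle_trans with ((Rabs (f z - h z) + 1) * (2 * eta)).
    - apply Rmult_le_compat; try lra; apply Rabs_pos.
    - right. unfold eta. field. lra. }
  replace (rsum f P - I) with ((rsum f P - rsum h P) + (rsum h P - I)) by ring.
  rewrite E. eapply Rle_lt_trans; [apply Rabs_triang|]. lra.
Qed.

Lemma McShane_int_zero_but_point F a b z : a < b ->
  (forall t, a <= t <= b -> t <> z -> F t = 0) -> McShane_int F a b 0.
Proof.
  intros Hab H. apply McShane_int_change_point with (h := fun _ => 0) (z := z); auto.
  pose proof (McShane_int_const 0 a b Hab) as H0. rewrite Rmult_0_l in H0. exact H0.
Qed.

Lemma continuity_pt_continuous f x : continuity_pt f x -> continuous f x.
Proof. apply continuity_pt_filterlim. Qed.

Lemma ex_RInt_continuity_pt f x y : x <= y -> (forall s, x <= s <= y -> continuity_pt f s) ->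
  ex_RInt f x y.
Proof.
  intros Hxy Hc. apply (@ex_RInt_continuous R_CompleteNormedModule). intros s Hs.
  apply continuity_pt_continuous, Hc. rewrite Rmin_left, Rmax_right in Hs by lra. lra.
Qed.

Lemma RInt_close_to_const (f : R -> R) x y t e : x <= y -> ex_RInt f x y ->
  (forall s, x <= s <= y -> Rabs (f s - f t) <= e) ->
  Rabs (f t * (y - x) - RInt f x y) <= e * (y - x).
Proof.
  intros Hxy Ex Hb.
  assert (E1 : RInt f x y <= RInt (fun _ => f t + e) x y).
  { apply RInt_le; auto. apply ex_RInt_const. intros s Hs.
    specialize (Hb s ltac:(lra)). apply Rabs_le_between in Hb. lra. }
  assert (E2 : RInt (fun _ => f t - e) x y <= RInt f x y).
  { apply RInt_le; auto. apply ex_RInt_const. intros s Hs.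
    specialize (Hb s ltac:(lra)). apply Rabs_le_between in Hb. lra. }
  rewrite !RInt_const in E1, E2. unfold scal in E1, E2; simpl in E1, E2.
  unfold mult in E1, E2; simpl in E1, E2.
  apply Rabs_le_between. split; nra.
Qed.

(* Uniform continuity makes each tagged interval contribute an error of at most
   [e * length]. *)
Lemma McShane_int_RInt f lo hi : lo < hi -> (forall x, lo <= x <= hi -> continuity_pt f x) ->
  McShane_int f lo hi (RInt f lo hi).
Proof.
  intros Hlh Hc. apply McShane_int_intro; auto. intros e He.
  assert (HU := Heine f (fun c => lo <= c <= hi) (compact_P3 lo hi) Hc).
  set (e' := e / (2 * (hi - lo))).
  assert (He' : 0 < e') by (unfold e'; apply Rdiv_lt_0_compat; lra).
  destruct (HU (mkposreal e' He')) as [[eta Heta] Hu]. simpl in Hu.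
  exists (fun _ => eta). split; [intros; auto|]. intros P HP.
  assert (G : forall x w Q, fine_div lo hi (fun _ => eta) x w Q -> lo <= x -> w <= hi ->
            Rabs (rsum f Q - RInt f x w) <= e' * (w - x)).
  { intros x w Q HQ. induction HQ as [?|x y z t Q0 H H0 H1 H2 HQ IHHQ]; intros Hx Hw.
    - rewrite rsum_nil, RInt_point, Rminus_0_r, Rabs_R0. lra.
    - pose proof (fine_div_le _ _ _ _ _ _ HQ) as Hyz.
      assert (Ex1 : ex_RInt f x y) by (apply ex_RInt_continuity_pt; [lra|intros; apply Hc; lra]).
      assert (Ex2 : ex_RInt f y z) by (apply ex_RInt_continuity_pt; [lra|intros; apply Hc; lra]).
      assert (Ch : RInt f x z = RInt f x y + RInt f y z) by (rewrite <- (RInt_Chasles f x y z Ex1 Ex2); reflexivity).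
      rewrite rsum_cons, Ch. specialize (IHHQ ltac:(lra) Hw).
      assert (Hpiece : Rabs (f t * (y - x) - RInt f x y) <= e' * (y - x)).
      { apply RInt_close_to_const; auto; [lra|]. intros s Hs. left. apply Hu; try lra.
        apply Rabs_def1; lra. }
      replace (f t * (y - x) + rsum f Q0 - (RInt f x y + RInt f y z))
        with ((f t * (y - x) - RInt f x y) + (rsum f Q0 - RInt f y z)) by ring.
      eapply Rle_trans; [apply Rabs_triang|]. lra. }
  specialize (G lo hi P HP ltac:(lra) ltac:(lra)).
  eapply Rle_lt_trans; [apply G|]. unfold e'.
  replace (e / (2 * (hi - lo)) * (hi - lo)) with (e / 2) by (field; lra). lra.
Qed.

Lemma integrable_uniform_limit f a b : a < b ->
  (forall eps, 0 < eps -> exists phi I, McShane_int phi a b I /\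
     forall t, a <= t <= b -> Rabs (f t - phi t) <= eps) ->
  integrable f a b.
Proof.
  intros Hab H. apply integrable_cauchy; auto. intros e He.
  destruct (H (e / (4 * (b - a)))) as [phi [I [HI Hphi]]]; [apply Rdiv_lt_0_compat; lra|].
  destruct (McShane_int_elim _ _ _ _ HI (e / 4) ltac:(lra)) as [d [Hd HP]].
  exists d. split; auto. intros P Q HPf HQf.
  pose proof (rsum_abs_le _ _ _ _ _ _ (fun x => f x - phi x) _ HPf Hphi) as B1.
  pose proof (rsum_abs_le _ _ _ _ _ _ (fun x => f x - phi x) _ HQf Hphi) as B2.
  rewrite rsum_minus in B1, B2.
  replace (e / (4 * (b - a)) * (b - a)) with (e / 4) in B1, B2 by (field; lra).
  pose proof (HP P HPf) as C1. pose proof (HP Q HQf) as C2.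
  apply Rabs_def2 in C1. apply Rabs_def2 in C2.
  apply Rabs_le_between in B1. apply Rabs_le_between in B2. apply Rabs_def1; lra.
Qed.

Fixpoint step (h : R -> R) (g : nat -> R) (n : nat) (x : R) : R :=
  match n with
  | O => h (g O)
  | S j => if Rle_dec (g (S j)) x then h (g (S j)) else step h g j x
  end.

Lemma step_spec h g n x : g O <= x ->
  exists k, (k <= n)%nat /\ step h g n x = h (g k) /\ g k <= x /\ (x < g (S k) \/ k = n).
Proof.
  intros H0. induction n.
  - exists O. simpl. repeat split; auto.
  - simpl. destruct (Rle_dec (g (S n)) x) as [Hl|Hl].
    + exists (S n). repeat split; auto.
    + destruct IHn as [k [Hk [E [Hx Hor]]]]. exists k. split; [lia|]. repeat split; auto.
      left. destruct Hor as [Hor|Hor]; auto. subst k. lra.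
Qed.

Section BoundedTimesContinuous.
Variables (f h : R -> R) (c d I M : R).
Hypothesis Hf : McShane_int f c d I.
Hypothesis HM : forall t, c <= t <= d -> Rabs (f t) <= M.
Hypothesis Hh : forall t, c <= t <= d -> continuity_pt h t.

(* The step function is constant on each cell of the grid. *)
Lemma integrable_mul_step N w : (0 < N)%nat -> w * INR N = d - c ->
  integrable (fun x => f x * step h (fun i => c + INR i * w) N x) c d.
Proof.
  intros HN Hw. pose proof (McShane_int_lt _ _ _ _ Hf) as Hcd.
  assert (Hw0 : 0 < w) by (apply (Rmult_lt_reg_r (INR N)); [apply lt_0_INR; lia|lra]).
  set (g := fun i : nat => c + INR i * w).
  set (phi := fun x => f x * step h g N x).
  assert (gS : forall i, g (S i) = g i + w) by (intros i; unfold g; rewrite S_INR; ring).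
  assert (gmono : forall i j, (i <= j)%nat -> g i <= g j) by (intros i j Hij; unfold g; apply le_INR in Hij; nra).
  assert (grange : forall i, (i <= N)%nat -> c <= g i <= d).
  { intros i Hi. pose proof (gmono O i ltac:(lia)). pose proof (gmono i N Hi).
    unfold g in *; simpl in *; lra. }
  assert (Hstep : forall i t, (i < N)%nat -> g i <= t < g (S i) -> step h g N t = h (g i)).
  { intros i t Hi Ht. destruct (step_spec h g N t) as [k [Hk [E [Hkt Hor]]]].
    { pose proof (gmono O i ltac:(lia)). lra. }
    rewrite E. do 2 f_equal.
    destruct (Nat.lt_trichotomy k i) as [Hlt|[Heq|Hgt]]; auto; exfalso.
    - pose proof (gmono (S k) i Hlt). destruct Hor as [Hor|Hor]; [lra|lia].
    - pose proof (gmono (S i) k Hgt). lra. }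
  assert (Hpiece : forall i, (i < N)%nat -> integrable phi (g i) (g (S i))).
  { intros i Hi. pose proof (grange i ltac:(lia)). pose proof (grange (S i) ltac:(lia)).
    destruct (integrable_sub f c d I (g i) (g (S i)) Hf) as [J HJ]; try lra; [rewrite gS; lra|].
    exists (h (g i) * J). apply McShane_int_change_point with (h := fun x => h (g i) * f x) (z := g (S i)).
    - apply McShane_int_scal; auto.
    - intros t Ht Hne. unfold phi. rewrite (Hstep i t Hi ltac:(lra)). ring. }
  assert (Hglue : forall i, (S i <= N)%nat -> integrable phi c (g (S i))).
  { induction i; intros Hi; [replace c with (g O) at 1 by (unfold g; simpl; ring); apply Hpiece; lia|].
    destruct (IHi ltac:(lia)) as [K1 HK1]. destruct (Hpiece (S i) ltac:(lia)) as [K2 HK2].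
    exists (K1 + K2). eapply McShane_int_chasles; eauto. }
  destruct N as [|N']; [lia|]. replace d with (g (S N')) by (unfold g; lra). apply Hglue; lia.
Qed.

Lemma integrable_mul_continuous : integrable (fun x => f x * h x) c d.
Proof.
  pose proof (McShane_int_lt _ _ _ _ Hf) as Hcd.
  assert (HM0 : 0 <= M) by (specialize (HM c ltac:(lra)); pose proof (Rabs_pos (f c)); lra).
  apply integrable_uniform_limit; auto. intros e He.
  assert (HU := Heine h (fun x => c <= x <= d) (compact_P3 c d) Hh).
  destruct (HU (mkposreal (e / (M + 1)) ltac:(apply Rdiv_lt_0_compat; lra))) as [[eta Heta] Hu].
  simpl in Hu.
  destruct (archimed_cor1 (eta / (d - c)) ltac:(apply Rdiv_lt_0_compat; lra)) as [N [HN1 HN2]].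
  assert (HNpos : 0 < INR N) by (apply lt_0_INR; lia).
  set (w := (d - c) / INR N).
  assert (Hw : w * INR N = d - c) by (unfold w; field; lra).
  assert (Hweta : w < eta).
  { unfold w. apply (Rmult_lt_reg_r (/ (d - c))); [apply Rinv_0_lt_compat; lra|].
    replace ((d - c) / INR N * / (d - c)) with (/ INR N) by (field; lra). auto. }
  set (g := fun i : nat => c + INR i * w).
  destruct (integrable_mul_step N w HN2 Hw) as [K HK].
  exists (fun x => f x * step h g N x), K. split; [exact HK|].
  intros t Ht. destruct (step_spec h g N t) as [k [Hk [E [Hkt Hor]]]]; [unfold g; simpl; lra|].
  rewrite E. replace (f t * h t - f t * h (g k)) with (f t * (h t - h (g k))) by ring.
  rewrite Rabs_mult.
  assert (Hgk : c <= g k <= d).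
  { assert (0 < w) by (unfold w; apply Rdiv_lt_0_compat; lra).
    apply le_INR in Hk. pose proof (pos_INR k). unfold g. split; nra. }
  assert (Hd : Rabs (h t - h (g k)) < e / (M + 1)).
  { apply Hu; try lra. destruct Hor as [Hor|Hor].
    - replace (g (S k)) with (g k + w) in Hor by (unfold g; rewrite S_INR; ring).
      apply Rabs_def1; lra.
    - rewrite Hor in Hkt |- *. replace (t - g N) with 0 by (unfold g in *; nra). rewrite Rabs_R0; lra. }
  specialize (HM t Ht). pose proof (Rabs_pos (h t - h (g k))).
  apply Rle_trans with ((M + 1) * (e / (M + 1))); [apply Rmult_le_compat; try lra; apply Rabs_pos|].
  right; field; lra.
Qed.

End BoundedTimesContinuous.

Lemma Rpower_pos x e : 0 < Rpower x e.
Proof. apply exp_pos. Qed.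

Lemma Rpower_1_base e : Rpower 1 e = 1.
Proof. unfold Rpower. rewrite ln_1, Rmult_0_r, exp_0. reflexivity. Qed.

Lemma Rpower_inv x e : 0 < x -> Rpower (/ x) e = / Rpower x e.
Proof. intros H. unfold Rpower. rewrite ln_Rinv, <- exp_Ropp by auto. f_equal. ring. Qed.

Lemma Rpower_continuity_pt x e : 0 < x -> continuity_pt (fun y => Rpower y e) x.
Proof.
  intros H. apply derivable_continuous_pt. exists (e * Rpower x (e - 1)).
  apply derivable_pt_lim_power; auto.
Qed.

Lemma pw_0 e : pw 0 e = 0.
Proof. unfold pw. destruct (Rle_dec 0 0); [auto|lra]. Qed.

Lemma pw_le0 x e : x <= 0 -> pw x e = 0.
Proof. unfold pw. destruct (Rle_dec x 0); [auto|lra]. Qed.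

Lemma pw_pos x e : 0 < x -> pw x e = Rpower x e.
Proof. unfold pw. destruct (Rle_dec x 0); [lra|auto]. Qed.

Lemma pw_nonneg x e : 0 <= pw x e.
Proof. unfold pw. destruct (Rle_dec x 0); [lra|]. apply Rlt_le, Rpower_pos. Qed.

Lemma pw_minus_1_mul x p : 0 <= x -> pw x (p - 1) * x = pw x p.
Proof.
  intros H. destruct (Req_dec x 0) as [->|Hx]; [rewrite !pw_0; ring|].
  rewrite !pw_pos by lra. rewrite <- (Rpower_1 x) at 2 by lra.
  rewrite <- Rpower_plus. f_equal. ring.
Qed.

Lemma phip_mul_self p x : phip p x * x = pw (Rabs x) p.
Proof.
  unfold phip. destruct (Rlt_dec x 0) as [H|H].
  - rewrite Rabs_left by auto. rewrite <- (pw_minus_1_mul (- x) p) by lra. ring.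
  - rewrite Rabs_right by lra. apply pw_minus_1_mul. lra.
Qed.

Lemma pw_abs_continuity_pt p y : 0 < p -> continuity_pt (fun y => pw (Rabs y) p) y.
Proof.
  intros Hp. destruct (Req_dec y 0) as [->|Hne].
  - intros e He. exists (Rpower e (/ p)). split; [apply Rpower_pos|].
    intros x [_ Hx]. simpl in *. unfold R_dist in *.
    rewrite Rabs_R0, pw_0, Rminus_0_r. rewrite Rminus_0_r in Hx.
    rewrite Rabs_right by apply Rle_ge, pw_nonneg.
    destruct (Req_dec x 0) as [->|Hx0]; [rewrite Rabs_R0, pw_0; auto|].
    rewrite pw_pos by (apply Rabs_pos_lt; auto).
    apply Rlt_le_trans with (Rpower (Rpower e (/ p)) p).
    + apply Rlt_Rpower_l; auto. split; [apply Rabs_pos_lt|]; auto.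
    + rewrite Rpower_mult. replace (/ p * p) with 1 by (field; lra). rewrite Rpower_1; lra.
  - assert (Ha : 0 < Rabs y) by (apply Rabs_pos_lt; auto).
    apply continuity_pt_locally_ext with (f := fun x => Rpower (Rabs x) p) (a := Rabs y); auto.
    + intros w Hw. unfold Rdist in Hw. symmetry. apply pw_pos. apply Rabs_def2 in Hw.
      apply Rabs_pos_lt. destruct (Rle_or_lt 0 y);
        [rewrite Rabs_right in Hw|rewrite Rabs_left in Hw]; lra.
    + apply continuity_pt_comp with (f1 := Rabs) (f2 := fun u => Rpower u p).
      * apply Rcontinuity_abs.
      * apply Rpower_continuity_pt; auto.
Qed.

Lemma pw_continuity_pt e y : 0 < e -> continuity_pt (fun y => pw y e) y.
Proof.
  intros He. destruct (Rtotal_order y 0) as [Hl|[->|Hg]].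
  - apply continuity_pt_locally_ext with (f := fun _ => 0) (a := - y); [lra| |apply continuity_pt_const; intros ? ?; auto].
    intros w Hw. unfold Rdist in Hw. apply Rabs_def2 in Hw. rewrite pw_le0; lra.
  - intros eps Heps. destruct (pw_abs_continuity_pt e 0 He eps Heps) as [d [Hd H]].
    exists d. split; auto. intros x Hx. specialize (H x Hx). simpl in *. unfold R_dist in *.
    rewrite Rabs_R0, pw_0, Rminus_0_r in *.
    rewrite Rabs_right in * by apply Rle_ge, pw_nonneg.
    destruct (Rle_or_lt x 0); [rewrite pw_le0; lra|rewrite Rabs_right in H; lra].
  - apply continuity_pt_locally_ext with (f := fun w => pw (Rabs w) e) (a := y); auto.
    + intros w Hw. unfold Rdist in Hw. apply Rabs_def2 in Hw. rewrite Rabs_right; lra.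
    + apply pw_abs_continuity_pt; auto.
Qed.

Lemma pw_derivable_pt_lim e y : 1 < e -> derivable_pt_lim (fun y => pw y e) y (e * pw y (e - 1)).
Proof.
  intros He. destruct (Rtotal_order y 0) as [Hl|[->|Hg]].
  - rewrite pw_le0, Rmult_0_r by lra.
    apply derivable_pt_lim_locally_ext with (f := fun _ => 0) (a := y - 1) (b := 0); [lra| |].
    + intros z Hz. rewrite pw_le0; lra.
    + apply derivable_pt_lim_const.
  - rewrite pw_0, Rmult_0_r. intros eps Heps.
    assert (Hd : 0 < Rpower eps (/ (e - 1))) by apply Rpower_pos.
    exists (mkposreal _ Hd). intros h Hh0 Hh. simpl in Hh.
    rewrite Rplus_0_l, pw_0, !Rminus_0_r.
    destruct (Rle_or_lt h 0) as [Hn|Hp].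
    + rewrite pw_le0 by auto. unfold Rdiv. rewrite Rmult_0_l, Rabs_R0. auto.
    + rewrite <- (pw_minus_1_mul h e) by lra. unfold Rdiv. rewrite Rmult_assoc, Rinv_r, Rmult_1_r by lra.
      rewrite Rabs_right by apply Rle_ge, pw_nonneg. rewrite pw_pos by auto.
      rewrite Rabs_right in Hh by lra.
      apply Rlt_le_trans with (Rpower (Rpower eps (/ (e - 1))) (e - 1)).
      * apply Rlt_Rpower_l; lra.
      * rewrite Rpower_mult. replace (/ (e - 1) * (e - 1)) with 1 by (field; lra).
        rewrite Rpower_1; lra.
  - rewrite pw_pos by auto.
    apply derivable_pt_lim_locally_ext with (f := fun w => Rpower w e) (a := 0) (b := y + 1); [lra| |].
    + intros z Hz. rewrite pw_pos; lra.
    + apply derivable_pt_lim_power; auto.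
Qed.

(** * Indefinite integrals and Sobolev functions *)

Definition continuous_on_interval (a b : R) (u : R -> R) : Prop :=
  forall x0, a <= x0 <= b -> forall e, 0 < e -> exists eta, 0 < eta /\
    forall x, a <= x <= b -> Rabs (x - x0) < eta -> Rabs (u x - u x0) < e.

Lemma continuity_pt_continuous_on_interval a b u :
  (forall x, a <= x <= b -> continuity_pt u x) -> continuous_on_interval a b u.
Proof.
  intros Hc x0 Hx0 e He. destruct (Hc x0 Hx0 e He) as [eta [Heta H]].
  exists eta. split; auto. intros x _ Hx.
  destruct (Req_dec x x0) as [->|Hne]; [rewrite Rminus_diag, Rabs_R0; auto|].
  apply (H x). split; [split; [exact I|intros E; apply Hne; auto]|exact Hx].
Qed.

Section IndefiniteIntegral.
Variables (a b : R) (u g : R -> R).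
Hypothesis Hab : a < b.
Hypothesis Hu : forall x, a < x <= b -> McShane_int g a x (u x).
Hypothesis Hua : u a = 0.

Lemma McShane_int_indefinite y z : a <= y -> y < z -> z <= b -> McShane_int g y z (u z - u y).
Proof.
  intros H1 H2 H3. destruct (Req_dec y a) as [->|Hne].
  - rewrite Hua, Rminus_0_r. apply Hu; lra.
  - apply McShane_int_diff with a; auto; apply Hu; lra.
Qed.

Lemma fine_div_indefinite y z d e : a <= y -> y <= z -> z <= b -> (forall t, 0 < d t) -> 0 < e ->
  exists D, fine_div a b d y z D /\ Rabs (rsum g D - (u z - u y)) < e.
Proof.
  intros H1 H2 H3 Hd He. destruct (Req_dec y z) as [<-|Hne].
  - exists nil. split; [constructor|]. rewrite rsum_nil, !Rminus_diag, Rabs_R0. auto.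
  - assert (HI := McShane_int_indefinite y z H1 ltac:(lra) H3).
    destruct (McShane_int_elim _ _ _ _ HI e He) as [d1 [Hd1 HP]].
    destruct (cousin y z (gauge_min d d1) (gauge_min_pos _ _ Hd Hd1) ltac:(lra)) as [D HD].
    exists D. split.
    + eapply fine_div_widen; [| |eapply fine_div_gauge_min_l; eauto]; lra.
    + apply HP. eapply fine_div_gauge_min_r; eauto.
Qed.

(* Complete a single interval between [x] and [x0], tagged at [x0], to a fine
   division of [[a, b]]: its Riemann sum is within [e] of [u b], which forces
   [u x - u x0] to be close to [g x0 * (x - x0)]. *)
Lemma indefinite_continuous_on_interval : continuous_on_interval a b u.
Proof.
  intros x0 Hx0 e He. assert (Hb := Hu b ltac:(lra)).
  destruct (McShane_int_elim _ _ _ _ Hb (e / 4) ltac:(lra)) as [d [Hd HP]].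
  assert (Hga : 0 <= Rabs (g x0)) by apply Rabs_pos.
  set (eta := Rmin (d x0) (e / (4 * (Rabs (g x0) + 1)))).
  assert (Heta : 0 < eta) by (apply Rmin_glb_lt; auto; apply Rdiv_lt_0_compat; lra).
  exists eta. split; auto. intros x Hx Hxx.
  assert (Hdx : Rabs (x - x0) < d x0).
  { pose proof (Rmin_l (d x0) (e / (4 * (Rabs (g x0) + 1)))) as Hm. fold eta in Hm. lra. }
  assert (Hpiece : Rabs (g x0 * (x - x0)) <= e / 4).
  { rewrite Rabs_mult.
    apply Rle_trans with ((Rabs (g x0) + 1) * (e / (4 * (Rabs (g x0) + 1)))); [|right; field; lra].
    apply Rmult_le_compat; try lra; try apply Rabs_pos.
    pose proof (Rmin_r (d x0) (e / (4 * (Rabs (g x0) + 1)))) as Hm. fold eta in Hm.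
    pose proof (Rabs_pos (x - x0)). lra. }
  apply Rabs_le_between in Hpiece. pose proof (Hd x0). apply Rabs_def2 in Hdx.
  destruct (Rtotal_order x x0) as [Hlt|[->|Hgt]].
  - destruct (fine_div_indefinite a x d (e / 4)) as [D1 [HD1 E1]]; try lra; auto.
    destruct (fine_div_indefinite x0 b d (e / 4)) as [D3 [HD3 E3]]; try lra; auto.
    assert (HT : fine_div a b d a b (D1 ++ (x, x0, x0) :: D3)).
    { eapply fine_div_app; eauto. econstructor; eauto; lra. }
    specialize (HP _ HT). rewrite rsum_app, rsum_cons in HP. rewrite Hua, Rminus_0_r in E1.
    apply Rabs_def2 in E1. apply Rabs_def2 in E3. apply Rabs_def2 in HP. apply Rabs_def1; lra.
  - rewrite Rminus_diag, Rabs_R0. auto.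
  - destruct (fine_div_indefinite a x0 d (e / 4)) as [D1 [HD1 E1]]; try lra; auto.
    destruct (fine_div_indefinite x b d (e / 4)) as [D3 [HD3 E3]]; try lra; auto.
    assert (HT : fine_div a b d a b (D1 ++ (x0, x, x0) :: D3)).
    { eapply fine_div_app; eauto. econstructor; eauto; lra. }
    specialize (HP _ HT). rewrite rsum_app, rsum_cons in HP. rewrite Hua, Rminus_0_r in E1.
    apply Rabs_def2 in E1. apply Rabs_def2 in E3. apply Rabs_def2 in HP. apply Rabs_def1; lra.
Qed.

End IndefiniteIntegral.

Lemma W0_continuous_on_interval p a b u g : W0 p a b u g -> continuous_on_interval a b u.
Proof. intros [Hab [_ [_ [Hua [Hu _]]]]]. apply indefinite_continuous_on_interval with g; auto. Qed.

Definition clamp (a b x : R) : R := Rmax a (Rmin b x).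

Lemma clamp_in a b x : a <= b -> a <= clamp a b x <= b.
Proof. intros H. unfold clamp, Rmax, Rmin. repeat destruct Rle_dec; lra. Qed.

Lemma clamp_id a b x : a <= x <= b -> clamp a b x = x.
Proof. intros H. unfold clamp, Rmax, Rmin. repeat destruct Rle_dec; lra. Qed.

Lemma clamp_lipschitz a b x y : a <= b -> Rabs (clamp a b x - clamp a b y) <= Rabs (x - y).
Proof.
  intros H. unfold clamp, Rmax, Rmin.
  repeat destruct Rle_dec; unfold Rabs; repeat destruct Rcase_abs; lra.
Qed.

Lemma continuity_pt_clamp_comp a b u x : a <= b -> continuous_on_interval a b u ->
  continuity_pt (fun y => u (clamp a b y)) x.
Proof.
  intros Hab Hc e He. destruct (Hc (clamp a b x) (clamp_in a b x Hab) e He) as [eta [Heta H]].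
  exists eta. split; auto. intros y [_ Hy]. simpl in *. unfold R_dist in *.
  apply H; [apply clamp_in; auto|]. eapply Rle_lt_trans; [apply clamp_lipschitz|]; auto.
Qed.

Lemma continuous_on_interval_endpoints_nonneg a b c d u : continuous_on_interval a b u ->
  a <= c -> c < d -> d <= b -> (forall x, c < x < d -> 0 < u x) -> 0 <= u c /\ 0 <= u d.
Proof.
  intros Hu H1 H2 H3 Hpos.
  assert (G : forall x0, (x0 = c \/ x0 = d) -> 0 <= u x0).
  { intros x0 Hx0. destruct (Rle_or_lt 0 (u x0)) as [|Hneg]; auto. exfalso.
    destruct (Hu x0 ltac:(lra) (- u x0) ltac:(lra)) as [eta [Heta Hx]].
    set (h := Rmin eta (d - c) / 2).
    assert (Hh : 0 < h <= eta / 2 /\ h <= (d - c) / 2).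
    { unfold h. pose proof (Rmin_l eta (d - c)). pose proof (Rmin_r eta (d - c)).
      assert (0 < Rmin eta (d - c)) by (apply Rmin_glb_lt; lra). lra. }
    set (x := if Req_dec_T x0 c then c + h else d - h).
    assert (Hxin : c < x < d) by (unfold x; destruct Req_dec_T; lra).
    assert (Hxx : Rabs (x - x0) < eta).
    { unfold x. destruct Req_dec_T as [->|Hne]; [apply Rabs_def1; lra|].
      destruct Hx0 as [Hx0| ->]; [congruence|apply Rabs_def1; lra]. }
    specialize (Hx x ltac:(lra) Hxx). specialize (Hpos x Hxin). apply Rabs_def2 in Hx. lra. }
  split; apply G; auto.
Qed.

Lemma continuous_on_interval_opp a b u : continuous_on_interval a b u ->
  continuous_on_interval a b (fun x => - u x).
Proof.
  intros Hu x0 Hx0 e He. destruct (Hu x0 Hx0 e He) as [eta [Heta H]].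
  exists eta. split; auto. intros x Hx Hxx. specialize (H x Hx Hxx).
  replace (- u x - - u x0) with (- (u x - u x0)) by ring. rewrite Rabs_Ropp. auto.
Qed.

Lemma pos_nodal_endpoints p a b u g c d : W0 p a b u g -> pos_nodal a b u c d -> u c = 0 /\ u d = 0.
Proof.
  intros HW [H1 [H2 [H3 [Hin [Hc Hd]]]]].
  destruct (continuous_on_interval_endpoints_nonneg a b c d u) as [Ec Ed]; auto.
  - eapply W0_continuous_on_interval; eauto.
  - split; lra.
Qed.

Lemma neg_nodal_endpoints p a b u g c d : W0 p a b u g -> neg_nodal a b u c d -> u c = 0 /\ u d = 0.
Proof.
  intros HW [H1 [H2 [H3 [Hin [Hc Hd]]]]].
  destruct (continuous_on_interval_endpoints_nonneg a b c d (fun x => - u x)) as [Ec Ed]; auto.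
  - apply continuous_on_interval_opp. eapply W0_continuous_on_interval; eauto.
  - intros x Hx. specialize (Hin x Hx). lra.
  - split; lra.
Qed.

(** * Testing the equation on a nodal domain *)

Definition zero_ext (c d : R) (h : R -> R) (x : R) : R :=
  if Rle_dec c x then if Rle_dec x d then h x else 0 else 0.

Lemma zero_ext_in c d h x : c <= x <= d -> zero_ext c d h x = h x.
Proof. intros H; unfold zero_ext; repeat destruct Rle_dec; lra. Qed.

Lemma zero_ext_out c d h x : x < c \/ d < x -> zero_ext c d h x = 0.
Proof. intros H; unfold zero_ext; repeat destruct Rle_dec; auto; lra. Qed.

Lemma zero_ext_comp c d h F x : F 0 = 0 -> F (zero_ext c d h x) = zero_ext c d (fun y => F (h y)) x.
Proof. intros H; unfold zero_ext; repeat destruct Rle_dec; auto. Qed.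

Lemma McShane_int_pad_left F a c z K : McShane_int F c z K -> a <= c ->
  (forall t, a <= t < c -> F t = 0) -> McShane_int F a z K.
Proof.
  intros H Hac HF. destruct (Req_dec a c) as [->|Hne]; auto.
  replace K with (0 + K) by ring. apply McShane_int_chasles with c; auto.
  apply McShane_int_zero_but_point with c; [lra|]. intros t Ht Hne'. apply HF; lra.
Qed.

Lemma McShane_int_pad_right F a d b K : McShane_int F a d K -> d <= b ->
  (forall t, d < t <= b -> F t = 0) -> McShane_int F a b K.
Proof.
  intros H Hdb HF. destruct (Req_dec d b) as [<-|Hne]; auto.
  replace K with (K + 0) by ring. apply McShane_int_chasles with d; auto.
  apply McShane_int_zero_but_point with d; [lra|]. intros t Ht Hne'. apply HF; lra.
Qed.

Lemma McShane_int_zero_ext F a b c d K : McShane_int F c d K -> a <= c -> d <= b ->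
  McShane_int (zero_ext c d F) a b K.
Proof.
  intros H H1 H3. pose proof (McShane_int_lt _ _ _ _ H).
  apply McShane_int_pad_right with d; auto; [|intros; apply zero_ext_out; lra].
  apply McShane_int_pad_left with c; auto; [|intros; apply zero_ext_out; lra].
  apply McShane_int_ext with F; auto. intros; rewrite zero_ext_in; auto.
Qed.

Lemma integrable_zero_ext f a b c d : integrable f a b -> a <= c -> c < d -> d <= b ->
  integrable (zero_ext c d f) a b.
Proof.
  intros [I H] H1 H2 H3. destruct (integrable_sub _ _ _ _ c d H H1 H2 H3) as [K HK].
  exists K. apply McShane_int_zero_ext; auto.
Qed.

Lemma McShane_int_of_zero_ext F a b c d J : McShane_int (zero_ext c d F) a b J ->
  a <= c -> c < d -> d <= b -> McShane_int F c d J.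
Proof.
  intros H H1 H2 H3. destruct (integrable_sub _ _ _ _ c d H H1 H2 H3) as [K HK].
  assert (HK' : McShane_int F c d K) by (apply McShane_int_ext with (1 := HK); intros; apply zero_ext_in; auto).
  rewrite (McShane_int_unique _ _ _ _ _ H (McShane_int_zero_ext _ _ _ _ _ _ HK' H1 H3)). exact HK'.
Qed.

Section NodalDomain.
Variables (p a b c d : R) (u g : R -> R).
Hypothesis HW : W0 p a b u g.
Hypotheses (Hac : a <= c) (Hcd : c < d) (Hdb : d <= b).
Hypotheses (Huc : u c = 0) (Hud : u d = 0).

Lemma W0_restrict : W0 p c d u g.
Proof.
  destruct HW as [Hab [Hm [Hi [Hua [Hu Hub]]]]].
  split; [auto|split; [|split; [|split; [auto|split; [|auto]]]]].
  - intros N HN. destruct (Hm N HN) as [I HI]. eapply integrable_sub; eauto.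
  - destruct Hi as [I HI]. eapply integrable_sub; eauto.
  - intros x Hx. replace (u x) with (u x - u c) by (rewrite Huc; ring).
    apply McShane_int_indefinite with (a := a) (b := b); auto; lra.
Qed.

Lemma W0_zero_ext : W0 p a b (zero_ext c d u) (zero_ext c d g).
Proof.
  destruct HW as [Hab [Hm [Hi [Hua [Hu Hub]]]]].
  assert (Hinside : forall x, c < x <= d -> McShane_int (zero_ext c d g) a x (u x)).
  { intros x Hx. apply McShane_int_pad_left with c; auto; [|intros; apply zero_ext_out; lra].
    apply McShane_int_ext with g; [|intros; rewrite zero_ext_in; lra].
    replace (u x) with (u x - u c) by (rewrite Huc; ring).
    apply McShane_int_indefinite with (a := a) (b := b); auto; lra. }
  split; [auto|split; [|split; [|split; [|split]]]].
  - intros N HN. destruct (integrable_zero_ext _ _ _ c d (Hm N HN) Hac Hcd Hdb) as [K HK].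
    exists K. apply McShane_int_ext with (1 := HK). intros t _.
    rewrite zero_ext_comp with (F := fun y => Rmax (- N) (Rmin N y)); auto.
    unfold Rmax, Rmin; repeat destruct Rle_dec; lra.
  - destruct (integrable_zero_ext _ _ _ c d Hi Hac Hcd Hdb) as [K HK].
    exists K. apply McShane_int_ext with (1 := HK). intros t _.
    rewrite zero_ext_comp with (F := fun y => pw (Rabs y) p); auto. rewrite Rabs_R0; apply pw_0.
  - unfold zero_ext. repeat destruct Rle_dec; auto.
  - intros x Hx. destruct (Rle_or_lt x c).
    + replace (zero_ext c d u x) with 0
        by (destruct (Req_dec x c) as [->|]; [rewrite zero_ext_in; lra|rewrite zero_ext_out; lra]).
      apply McShane_int_zero_but_point with c; [lra|]. intros t Ht Hne. apply zero_ext_out; lra.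
    + destruct (Rle_or_lt x d); [rewrite zero_ext_in by lra; apply Hinside; lra|].
      rewrite zero_ext_out by lra. pose proof (Hinside d ltac:(lra)) as Hd. rewrite Hud in Hd.
      apply McShane_int_pad_right with d; auto; [lra|]. intros; apply zero_ext_out; lra.
  - unfold zero_ext. repeat destruct Rle_dec; auto.
Qed.

(* Testing the weak formulation with [u] restricted to [(c, d)] turns
   [int |u'|^p] into [int Rhs u <= K int |u|^p], so the Rayleigh quotient of
   [u] on [(c, d)] is at most [K]. *)
Lemma mu1_le_of_nodal_domain (Rhs : R -> R) K : 1 < p -> nontrivial_on c d u ->
  (forall phi psi, W0 p a b phi psi -> exists J,
      McShane_int (fun x => phip p (g x) * psi x) a b J /\ McShane_int (fun x => Rhs x * phi x) a b J) ->
  0 <= K -> (forall x, c < x < d -> Rhs x * u x <= K * pw (Rabs (u x)) p) ->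
  forall L, is_mu1 p c d L -> L <= K.
Proof.
  intros Hp Hnt Hweak HK Hbound L [HL _].
  destruct (Hweak _ _ W0_zero_ext) as [J [HJ1 HJ2]].
  assert (HA : McShane_int (fun x => pw (Rabs (g x)) p) c d J).
  { apply McShane_int_of_zero_ext with a b; auto.
    apply McShane_int_ext with (1 := HJ1). intros t _.
    unfold zero_ext. repeat destruct Rle_dec; try ring. apply phip_mul_self. }
  assert (HR : McShane_int (fun x => Rhs x * u x) c d J).
  { apply McShane_int_of_zero_ext with a b; auto.
    apply McShane_int_ext with (1 := HJ2). intros t _. unfold zero_ext. repeat destruct Rle_dec; ring. }
  assert (HB : exists B, McShane_int (fun x => pw (Rabs (u x)) p) c d B).
  { eexists. apply McShane_int_ext with (fun x => pw (Rabs (u (clamp a b x))) p).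
    - apply McShane_int_RInt; auto. intros x _.
      apply continuity_pt_comp with (f1 := fun y => u (clamp a b y)) (f2 := fun z => pw (Rabs z) p).
      + apply continuity_pt_clamp_comp; [destruct HW; lra|]. eapply W0_continuous_on_interval; eauto.
      + apply pw_abs_continuity_pt; lra.
    - intros t Ht. rewrite clamp_id; auto; lra. }
  destruct HB as [B HB].
  assert (HJB : J <= K * B).
  { apply McShane_int_le with (1 := HR) (2 := McShane_int_scal K _ _ _ _ HB). intros t Ht.
    destruct (Req_dec t c) as [->|Hn1]; [rewrite Huc, Rabs_R0, pw_0; lra|].
    destruct (Req_dec t d) as [->|Hn2]; [rewrite Hud, Rabs_R0, pw_0; lra|].
    apply Hbound; lra. }
  assert (HB0 : 0 <= B) by (apply McShane_int_ge0 with (1 := HB); intros; apply pw_nonneg).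
  assert (Hq : RQ p (fun _ => 1) c d (J / B)).
  { exists u, g, J, B. split; [exact W0_restrict|split; [exact Hnt|split; [exact HA|]]].
    split; [|reflexivity]. apply McShane_int_ext with (1 := HB). intros; ring. }
  specialize (HL _ Hq). destruct (Req_dec B 0) as [E|E].
  - rewrite E in HL. unfold Rdiv in HL. rewrite Rinv_0, Rmult_0_r in HL. lra.
  - apply Rle_trans with (J / B); auto. apply Rmult_le_reg_r with B; [lra|].
    unfold Rdiv. rewrite Rmult_assoc, Rinv_l, Rmult_1_r; auto.
Qed.

End NodalDomain.

(** * The generalized arcsine *)

Section ArcsinP.
Variable p : R.
Hypothesis Hp : 1 < p.

(* [arcsin_p_deriv] is the integrand in [is_pi_p]; on [[0, 1)], [arcsin_p] is the
   inverse of the p-sine function. *)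
Definition arcsin_p_deriv (y : R) : R := pw (1 - pw y p) (- (1 / p)).

Definition arcsin_p (y : R) : R := RInt arcsin_p_deriv 0 y.

Lemma pw_lt_1 y : y < 1 -> pw y p < 1.
Proof.
  intros H. destruct (Rle_or_lt y 0); [rewrite pw_le0; lra|].
  rewrite pw_pos by auto. rewrite <- (Rpower_1_base p). apply Rlt_Rpower_l; lra.
Qed.

Lemma one_minus_pw_pos y : y < 1 -> 0 < 1 - pw y p.
Proof. intros H. pose proof (pw_lt_1 y H). lra. Qed.

Lemma one_minus_pw_continuity_pt y : continuity_pt (fun y => 1 - pw y p) y.
Proof.
  apply continuity_pt_minus with (f1 := fun _ => 1) (f2 := fun y => pw y p).
  - apply continuity_pt_const. intros ? ?; auto.
  - apply pw_continuity_pt; lra.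
Qed.

Lemma arcsin_p_deriv_eq y : y < 1 -> arcsin_p_deriv y = Rpower (1 - pw y p) (- (1 / p)).
Proof. intros H. apply pw_pos, one_minus_pw_pos; auto. Qed.

Lemma arcsin_p_deriv_ge_1 y : y < 1 -> 1 <= arcsin_p_deriv y.
Proof.
  intros H. rewrite arcsin_p_deriv_eq, Rpower_Ropp by auto.
  assert (0 < Rpower (1 - pw y p) (1 / p)) by apply Rpower_pos.
  assert (Rpower (1 - pw y p) (1 / p) <= 1).
  { apply Rle_trans with (Rpower 1 (1 / p)); [apply Rle_Rpower_l|rewrite Rpower_1_base; lra].
    - apply Rlt_le, Rdiv_lt_0_compat; lra.
    - split; [apply one_minus_pw_pos; auto|]. pose proof (pw_nonneg y p); lra. }
  rewrite <- Rinv_1 at 1. apply Rinv_le_contravar; auto.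
Qed.

Lemma arcsin_p_deriv_pos y : y < 1 -> 0 < arcsin_p_deriv y.
Proof. intros H; pose proof (arcsin_p_deriv_ge_1 y H); lra. Qed.

Lemma arcsin_p_deriv_continuity_pt y : y < 1 -> continuity_pt arcsin_p_deriv y.
Proof.
  intros H.
  apply continuity_pt_locally_ext with (f := fun w => Rpower (1 - pw w p) (- (1 / p))) (a := 1 - y); [lra| |].
  - intros w Hw. unfold Rdist in Hw. apply Rabs_def2 in Hw. symmetry. apply arcsin_p_deriv_eq. lra.
  - apply continuity_pt_comp with (f1 := fun w => 1 - pw w p) (f2 := fun z => Rpower z (- (1 / p))).
    + apply one_minus_pw_continuity_pt.
    + apply Rpower_continuity_pt, one_minus_pw_pos; auto.
Qed.

Lemma ex_RInt_arcsin_p_deriv y1 y2 : y1 < 1 -> y2 < 1 -> ex_RInt arcsin_p_deriv y1 y2.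
Proof.
  intros H1 H2. apply (@ex_RInt_continuous R_CompleteNormedModule). intros z Hz.
  apply continuity_pt_continuous, arcsin_p_deriv_continuity_pt.
  destruct Hz as [_ Hz]. unfold Rmax in Hz. destruct Rle_dec; lra.
Qed.

Lemma arcsin_p_is_derive y : y < 1 -> is_derive arcsin_p y (arcsin_p_deriv y).
Proof.
  intros H. apply (@is_derive_RInt R_NormedModule) with (a := 0).
  - exists (mkposreal ((1 - y) / 2) ltac:(apply Rdiv_lt_0_compat; lra)).
    intros b Hb. unfold ball in Hb; simpl in Hb.
    unfold AbsRing_ball, abs, minus, plus, opp in Hb; simpl in Hb. apply Rabs_def2 in Hb.
    apply (@RInt_correct R_CompleteNormedModule), ex_RInt_arcsin_p_deriv; lra.
  - apply continuity_pt_continuous, arcsin_p_deriv_continuity_pt; auto.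
Qed.

Lemma arcsin_p_0 : arcsin_p 0 = 0.
Proof. apply (@RInt_point R_CompleteNormedModule). Qed.

Lemma arcsin_p_increment_ge y1 y2 : y1 <= y2 -> y2 < 1 -> y2 - y1 <= arcsin_p y2 - arcsin_p y1.
Proof.
  intros H12 H2. unfold arcsin_p.
  rewrite <- (RInt_Chasles arcsin_p_deriv 0 y1 y2) by (apply ex_RInt_arcsin_p_deriv; lra).
  assert (RInt (fun _ => 1) y1 y2 <= RInt arcsin_p_deriv y1 y2).
  { apply RInt_le; auto; [apply ex_RInt_const|apply ex_RInt_arcsin_p_deriv; lra|].
    intros x Hx. apply arcsin_p_deriv_ge_1; lra. }
  rewrite RInt_const in H. unfold scal in H; simpl in H; unfold mult in H; simpl in H.
  unfold plus; simpl. lra.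
Qed.

End ArcsinP.

Section IntegrationByParts.
Variables (p Y : R).
Hypothesis Hp : 1 < p.
Hypotheses (HY0 : 0 < Y) (HY1 : Y < 1).

(* For the truncated p-sine profile, [energy_integral] is (up to scaling) the
   energy [int |v'|^p] and [mass_integral] the mass [int |v|^p]. *)
Definition energy_integral : R := RInt (fun y => (1 - pw y p) * arcsin_p_deriv p y) 0 Y.
Definition mass_integral : R := RInt (fun y => arcsin_p_deriv p y * pw y p) 0 Y.

Let q := (p - 1) / p.

Lemma ex_RInt_upto_Y (f : R -> R) : (forall y, y < 1 -> continuity_pt f y) -> ex_RInt f 0 Y.
Proof. intros H. apply ex_RInt_continuity_pt; [lra|]. intros; apply H; lra. Qed.

Lemma ex_RInt_energy : ex_RInt (fun y => (1 - pw y p) * arcsin_p_deriv p y) 0 Y.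
Proof.
  apply ex_RInt_upto_Y. intros y Hy.
  apply continuity_pt_mult with (f1 := fun y => 1 - pw y p) (f2 := arcsin_p_deriv p).
  - apply one_minus_pw_continuity_pt; auto.
  - apply arcsin_p_deriv_continuity_pt; auto.
Qed.

Lemma ex_RInt_mass : ex_RInt (fun y => arcsin_p_deriv p y * pw y p) 0 Y.
Proof.
  apply ex_RInt_upto_Y. intros y Hy.
  apply continuity_pt_mult with (f1 := arcsin_p_deriv p) (f2 := fun y => pw y p).
  - apply arcsin_p_deriv_continuity_pt; auto.
  - apply pw_continuity_pt; lra.
Qed.

Lemma energy_plus_mass : energy_integral + mass_integral = arcsin_p p Y.
Proof.
  unfold energy_integral, mass_integral, arcsin_p. symmetry. apply is_RInt_unique.
  apply is_RInt_ext with (fun y => plus ((1 - pw y p) * arcsin_p_deriv p y) (arcsin_p_deriv p y * pw y p)).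
  - intros x _. unfold plus; simpl. ring.
  - apply (@is_RInt_plus R_NormedModule); apply (@RInt_correct R_CompleteNormedModule);
      [apply ex_RInt_energy|apply ex_RInt_mass].
Qed.

Let boundary (y : R) : R := y * Rpower (1 - pw y p) q.

Let boundary_deriv (y : R) : R :=
  Rpower (1 - pw y p) q + y * (q * Rpower (1 - pw y p) (q - 1) * (- (p * pw y (p - 1)))).

Lemma boundary_derivable_pt_lim y : y < 1 -> derivable_pt_lim boundary y (boundary_deriv y).
Proof.
  intros Hy. unfold boundary, boundary_deriv.
  assert (Hb : derivable_pt_lim (fun y => 1 - pw y p) y (0 - p * pw y (p - 1))).
  { apply (derivable_pt_lim_minus (fun _ => 1) (fun y => pw y p)).
    - apply derivable_pt_lim_const.
    - apply pw_derivable_pt_lim; auto. }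
  assert (Hc : derivable_pt_lim (fun y => Rpower (1 - pw y p) q) y
                 (q * Rpower (1 - pw y p) (q - 1) * (0 - p * pw y (p - 1)))).
  { apply (derivable_pt_lim_comp (fun y => 1 - pw y p) (fun z => Rpower z q)); auto.
    apply derivable_pt_lim_power, one_minus_pw_pos; auto. }
  assert (Hm := derivable_pt_lim_mult (fun y => y) _ y 1 _ (derivable_pt_lim_id y) Hc).
  replace (Rpower (1 - pw y p) q + y * (q * Rpower (1 - pw y p) (q - 1) * - (p * pw y (p - 1))))
    with (1 * Rpower (1 - pw y p) q + y * (q * Rpower (1 - pw y p) (q - 1) * (0 - p * pw y (p - 1))))
    by ring.
  exact Hm.
Qed.

Lemma boundary_deriv_eq y : 0 <= y < 1 ->
  boundary_deriv y = (1 - pw y p) * arcsin_p_deriv p y - (p - 1) * (arcsin_p_deriv p y * pw y p).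
Proof.
  intros Hy. unfold boundary_deriv. rewrite arcsin_p_deriv_eq by lra.
  pose proof (one_minus_pw_pos p Hp y ltac:(lra)) as Hb.
  assert (E1 : Rpower (1 - pw y p) q = (1 - pw y p) * Rpower (1 - pw y p) (- (1 / p))).
  { rewrite <- (Rpower_1 (1 - pw y p)) at 2 by auto. rewrite <- Rpower_plus. f_equal.
    unfold q. field. lra. }
  assert (E2 : q - 1 = - (1 / p)) by (unfold q; field; lra).
  assert (E3 : y * pw y (p - 1) = pw y p) by (rewrite Rmult_comm; apply pw_minus_1_mul; lra).
  rewrite E1, E2. unfold q.
  replace (y * ((p - 1) / p * Rpower (1 - pw y p) (- (1 / p)) * - (p * pw y (p - 1))))
    with (- ((p - 1) * (y * pw y (p - 1)) * Rpower (1 - pw y p) (- (1 / p)))) by (field; lra).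
  rewrite E3. ring.
Qed.

Lemma boundary_deriv_continuity_pt y : y < 1 -> continuity_pt boundary_deriv y.
Proof.
  intros Hy. pose proof (one_minus_pw_pos p Hp y Hy) as Hb.
  assert (Hpow : forall e, continuity_pt (fun y => Rpower (1 - pw y p) e) y).
  { intros e. apply continuity_pt_comp with (f1 := fun y => 1 - pw y p) (f2 := fun z => Rpower z e);
      [apply one_minus_pw_continuity_pt; auto|apply Rpower_continuity_pt; auto]. }
  unfold boundary_deriv. apply continuity_pt_plus; [apply Hpow|].
  apply continuity_pt_mult; [apply derivable_continuous_pt, derivable_id|].
  apply continuity_pt_mult; [apply continuity_pt_scal, Hpow|].
  apply continuity_pt_opp, continuity_pt_scal, pw_continuity_pt; lra.
Qed.

Lemma energy_minus_mass :
  energy_integral - (p - 1) * mass_integral = Y * Rpower (1 - pw Y p) ((p - 1) / p).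
Proof.
  assert (H1 : is_RInt boundary_deriv 0 Y (minus (boundary Y) (boundary 0))).
  { apply (@is_RInt_derive R_CompleteNormedModule); intros x Hx; rewrite Rmin_left, Rmax_right in Hx by lra.
    - apply is_derive_Reals, boundary_derivable_pt_lim; lra.
    - apply continuity_pt_continuous, boundary_deriv_continuity_pt; lra. }
  assert (H2 : is_RInt boundary_deriv 0 Y (minus energy_integral (scal (p - 1) mass_integral))).
  { apply is_RInt_ext with (fun y => minus ((1 - pw y p) * arcsin_p_deriv p y)
                                          (scal (p - 1) (arcsin_p_deriv p y * pw y p))).
    - intros x Hx. rewrite Rmin_left, Rmax_right in Hx by lra. rewrite boundary_deriv_eq by lra.
      unfold minus, plus, opp, scal; simpl. unfold mult; simpl. ring.
    - apply (@is_RInt_minus R_NormedModule).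
      + apply (@RInt_correct R_CompleteNormedModule), ex_RInt_energy.
      + apply (@is_RInt_scal R_NormedModule), (@RInt_correct R_CompleteNormedModule), ex_RInt_mass. }
  apply (@is_RInt_unique R_CompleteNormedModule) in H1.
  apply (@is_RInt_unique R_CompleteNormedModule) in H2. rewrite H1 in H2.
  unfold minus, plus, opp, scal in H2; simpl in H2. unfold mult in H2; simpl in H2.
  unfold boundary, q in H2. lra.
Qed.

End IntegrationByParts.

Lemma energy_integrand_eq p lam y : 1 < p -> 0 < lam -> y < 1 ->
  lam * arcsin_p_deriv p y * pw (/ (lam * arcsin_p_deriv p y)) p =
  Rpower lam (1 - p) * ((1 - pw y p) * arcsin_p_deriv p y).
Proof.
  intros Hp Hl Hy. pose proof (arcsin_p_deriv_pos p Hp y Hy) as Hf.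
  pose proof (one_minus_pw_pos p Hp y Hy) as Hb.
  assert (Hlf : 0 < lam * arcsin_p_deriv p y) by nra.
  rewrite pw_pos by (apply Rinv_0_lt_compat; auto). rewrite Rpower_inv by auto.
  assert (E : lam * arcsin_p_deriv p y * / Rpower (lam * arcsin_p_deriv p y) p =
              Rpower (lam * arcsin_p_deriv p y) (1 - p)).
  { replace (1 - p) with (1 + - p) by ring. rewrite Rpower_plus, Rpower_1, Rpower_Ropp by auto. auto. }
  rewrite E, <- Rpower_mult_distr by auto. f_equal.
  rewrite arcsin_p_deriv_eq, Rpower_mult by auto.
  rewrite <- (Rpower_1 (1 - pw y p)) at 2 by auto. rewrite <- Rpower_plus. f_equal. field. lra.
Qed.

Lemma arcsin_p_le_integral p J Y : 1 < p -> McShane_int (arcsin_p_deriv p) 0 1 J -> 0 < Y < 1 ->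
  arcsin_p p Y <= J.
Proof.
  intros Hp HJ HY. destruct (McShane_int_split _ 0 Y 1 J HJ) as [I1 [I2 [H1 [H2 E]]]]; try lra.
  assert (E1 : I1 = arcsin_p p Y).
  { apply McShane_int_unique with (arcsin_p_deriv p) 0 Y; auto.
    apply McShane_int_RInt; [lra|]. intros; apply arcsin_p_deriv_continuity_pt; auto; lra. }
  assert (0 <= I2) by (apply McShane_int_ge0 with (1 := H2); intros; apply pw_nonneg). lra.
Qed.

Lemma continuity_pt_reflect (h : R -> R) c x : (forall x, continuity_pt h x) ->
  continuity_pt (fun s => h (c - s)) x.
Proof.
  intros Hc. apply continuity_pt_comp with (f1 := fun s => c - s) (f2 := h); auto.
  apply continuity_pt_minus; [apply continuity_pt_const; intros ? ?; auto|apply derivable_continuous_pt, derivable_id].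
Qed.

Lemma ex_RInt_continuity (h : R -> R) x y : (forall x, continuity_pt h x) -> ex_RInt h x y.
Proof. intros H. apply (@ex_RInt_continuous R_CompleteNormedModule). intros; apply continuity_pt_continuous; auto. Qed.

Lemma RInt_reflect (h : R -> R) x y c : (forall x, continuity_pt h x) ->
  RInt (fun s => h (c - s)) x y = RInt h (c - y) (c - x).
Proof.
  intros Hc.
  assert (E := RInt_comp_lin h (-1) c x y (ex_RInt_continuity h _ _ Hc)).
  assert (E2 : RInt (fun s => scal (-1) (h (-1 * s + c))) x y = - RInt (fun s => h (c - s)) x y).
  { rewrite <- (RInt_opp (fun s => h (c - s)))
      by (apply ex_RInt_continuity; intros; apply continuity_pt_reflect; auto).
    apply RInt_ext. intros s _. unfold scal, opp; simpl. unfold mult; simpl.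
    replace (-1 * s + c) with (c - s) by ring. ring. }
  assert (E3 : - RInt (fun s => h (c - s)) x y = RInt h (-1 * x + c) (-1 * y + c))
    by (rewrite <- E2; exact E).
  replace (-1 * x + c) with (c - x) in E3 by ring. replace (-1 * y + c) with (c - y) in E3 by ring.
  rewrite <- (opp_RInt_swap h) in E3 by (apply ex_RInt_continuity; auto).
  unfold opp in E3; simpl in E3. lra.
Qed.

(** * A truncated p-sine test function *)

(* On [(c0, d0)] the test function is symmetric about the midpoint; on the left
   half it is [x |-> profile (x - c0)], where [profile] inverts
   [arc y = scale * arcsin_p y] on [[0, Y]].  Hence its derivative is
   [1 / (scale * arcsin_p' (profile (x - c0)))], and the substitution
   [y = profile (x - c0)] turns its energy and mass into [energy_integral] and
   [mass_integral].  Truncating at [Y < 1] keeps [arcsin_p'] bounded. *)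
Section TestFunction.
Variables (p Y c0 d0 : R).
Hypothesis Hp : 1 < p.
Hypotheses (HY0 : 0 < Y) (HY1 : Y < 1).
Hypothesis Hcd : c0 < d0.

Lemma le_arcsin_p : Y <= arcsin_p p Y.
Proof. pose proof (arcsin_p_increment_ge p Hp 0 Y ltac:(lra) HY1). rewrite arcsin_p_0 in H. lra. Qed.

Definition scale : R := (d0 - c0) / (2 * arcsin_p p Y).
Definition arc (y : R) : R := scale * arcsin_p p y.
Definition half : R := (d0 - c0) / 2.
Definition midpoint : R := c0 + half.

Lemma scale_pos : 0 < scale.
Proof. unfold scale. pose proof le_arcsin_p. apply Rdiv_lt_0_compat; lra. Qed.

Lemma arc_Y : arc Y = half.
Proof. unfold arc, scale, half. pose proof le_arcsin_p. field. lra. Qed.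

Lemma arc_0 : arc 0 = 0.
Proof. unfold arc. rewrite arcsin_p_0. ring. Qed.

Lemma midpoint_props : c0 < midpoint < d0 /\ c0 + d0 - midpoint = midpoint /\
  midpoint - c0 = half /\ d0 - midpoint = half.
Proof. unfold midpoint, half. repeat split; lra. Qed.

Lemma arc_increment_ge y1 y2 : y1 <= y2 -> y2 < 1 -> scale * (y2 - y1) <= arc y2 - arc y1.
Proof.
  intros H1 H2. unfold arc. pose proof (arcsin_p_increment_ge p Hp y1 y2 H1 H2). pose proof scale_pos.
  rewrite <- Rmult_minus_distr_l. apply Rmult_le_compat_l; lra.
Qed.

Lemma arc_range y : 0 <= y <= Y -> 0 <= arc y <= half.
Proof.
  intros H. pose proof (arc_increment_ge 0 y ltac:(lra) ltac:(lra)).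
  pose proof (arc_increment_ge y Y ltac:(lra) ltac:(lra)). rewrite arc_0, arc_Y in *.
  pose proof scale_pos. nra.
Qed.

Lemma arc_inj y1 y2 : 0 <= y1 <= Y -> 0 <= y2 <= Y -> arc y1 = arc y2 -> y1 = y2.
Proof.
  intros H1 H2 E. pose proof scale_pos. destruct (Rtotal_order y1 y2) as [Hl|[|Hg]]; auto.
  - pose proof (arc_increment_ge y1 y2 ltac:(lra) ltac:(lra)). nra.
  - pose proof (arc_increment_ge y2 y1 ltac:(lra) ltac:(lra)). nra.
Qed.

Lemma arc_is_derive y : y < 1 -> is_derive arc y (scale * arcsin_p_deriv p y).
Proof. intros H. apply (is_derive_scal (arcsin_p p)), arcsin_p_is_derive; auto. Qed.

Lemma arc_continuity_pt y : y < 1 -> continuity_pt arc y.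
Proof.
  intros H. apply derivable_continuous_pt. exists (scale * arcsin_p_deriv p y).
  apply is_derive_Reals, arc_is_derive; auto.
Qed.

Lemma arc_clamp_continuous : continuity (fun y => arc (clamp 0 Y y)).
Proof.
  intros y. apply continuity_pt_clamp_comp; [lra|].
  apply continuity_pt_continuous_on_interval. intros; apply arc_continuity_pt; lra.
Qed.

Lemma profile_range_pf z : Rmin (arc (clamp 0 Y 0)) (arc (clamp 0 Y Y)) <= clamp 0 half z <=
  Rmax (arc (clamp 0 Y 0)) (arc (clamp 0 Y Y)).
Proof.
  rewrite !clamp_id, arc_0, arc_Y by lra. unfold half.
  rewrite Rmin_left, Rmax_right by lra. apply clamp_in; lra.
Qed.

(* The inverse of [arc], extended by constants outside [[0, half]]. *)
Definition profile (z : R) : R :=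
  proj1_sig (IVT_gen _ 0 Y (clamp 0 half z) arc_clamp_continuous (profile_range_pf z)).

Lemma profile_spec z : 0 <= profile z <= Y /\ arc (profile z) = clamp 0 half z.
Proof.
  unfold profile. destruct (IVT_gen _ 0 Y _ arc_clamp_continuous (profile_range_pf z)) as [y [Hy E]].
  simpl. rewrite Rmin_left, Rmax_right in Hy by lra. split; auto. rewrite clamp_id in E; auto.
Qed.

Lemma profile_arc y : 0 <= y <= Y -> profile (arc y) = y.
Proof.
  intros H. destruct (profile_spec (arc y)) as [Hr E]. rewrite clamp_id in E by (apply arc_range; auto).
  apply arc_inj; auto.
Qed.

Lemma profile_lipschitz z1 z2 : scale * Rabs (profile z1 - profile z2) <= Rabs (z1 - z2).
Proof.
  destruct (profile_spec z1) as [H1 E1]. destruct (profile_spec z2) as [H2 E2].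
  assert (Hc : Rabs (arc (profile z1) - arc (profile z2)) <= Rabs (z1 - z2)).
  { rewrite E1, E2. apply clamp_lipschitz. unfold half; lra. }
  pose proof scale_pos.
  destruct (Rle_or_lt (profile z1) (profile z2)).
  - pose proof (arc_increment_ge (profile z1) (profile z2) ltac:(lra) ltac:(lra)).
    rewrite Rabs_left1 in * by lra. rewrite (Rabs_left1 (arc (profile z1) - arc (profile z2))) in Hc by nra.
    nra.
  - pose proof (arc_increment_ge (profile z2) (profile z1) ltac:(lra) ltac:(lra)).
    rewrite Rabs_right in * by lra. rewrite (Rabs_right (arc (profile z1) - arc (profile z2))) in Hc by nra.
    nra.
Qed.

Lemma profile_continuity_pt z : continuity_pt profile z.
Proof.
  intros e He. pose proof scale_pos. exists (scale * e). split; [nra|].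
  intros y [_ Hy]. simpl in *. unfold R_dist in *.
  pose proof (profile_lipschitz y z). apply Rmult_lt_reg_l with scale; auto. lra.
Qed.

Lemma profile_0 : profile 0 = 0.
Proof. rewrite <- arc_0 at 1. apply profile_arc. lra. Qed.

Lemma profile_lt_1 z : profile z < 1.
Proof. destruct (profile_spec z) as [H _]. lra. Qed.

Definition test_fun (x : R) : R := profile (half - Rabs (x - midpoint)).
Definition profile_deriv (x : R) : R := / (scale * arcsin_p_deriv p (profile (x - c0))).
Definition test_deriv (x : R) : R :=
  if Rle_dec x midpoint then profile_deriv x else - profile_deriv (c0 + d0 - x).

Lemma test_fun_continuity_pt x : continuity_pt test_fun x.
Proof.
  unfold test_fun. apply continuity_pt_comp with (f2 := profile); [|apply profile_continuity_pt].
  apply continuity_pt_minus; [apply continuity_pt_const; intros ? ?; auto|].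
  apply continuity_pt_comp with (f1 := fun x => x - midpoint) (f2 := Rabs); [|apply Rcontinuity_abs].
  apply continuity_pt_minus; [apply derivable_continuous_pt, derivable_id|apply continuity_pt_const; intros ? ?; auto].
Qed.

Lemma profile_deriv_continuity_pt x : continuity_pt profile_deriv x.
Proof.
  unfold profile_deriv. pose proof scale_pos.
  apply continuity_pt_inv.
  - apply continuity_pt_scal.
    apply continuity_pt_comp with (f1 := fun z => profile (z - c0)) (f2 := arcsin_p_deriv p).
    + apply continuity_pt_comp with (f1 := fun z => z - c0) (f2 := profile); [|apply profile_continuity_pt].
      apply continuity_pt_minus; [apply derivable_continuous_pt, derivable_id|apply continuity_pt_const; intros ? ?; auto].
    + apply arcsin_p_deriv_continuity_pt; [exact Hp|apply profile_lt_1].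
  - pose proof (arcsin_p_deriv_pos p Hp _ (profile_lt_1 (x - c0))). nra.
Qed.

Lemma RInt_change_var (h : R -> R) y1 : 0 <= y1 <= Y ->
  (forall x, c0 <= x <= midpoint -> continuity_pt h x) ->
  RInt h c0 (c0 + arc y1) = RInt (fun y => scale * arcsin_p_deriv p y * h (c0 + arc y)) 0 y1.
Proof.
  intros Hy1 Hc.
  assert (E := RInt_comp h (fun y => c0 + arc y) (fun y => scale * arcsin_p_deriv p y) 0 y1).
  cbv beta in E. rewrite arc_0, Rplus_0_r in E. rewrite <- E.
  - apply RInt_ext. intros x Hx. reflexivity.
  - intros x Hx. rewrite Rmin_left, Rmax_right in Hx by lra. apply continuity_pt_continuous, Hc.
    pose proof (arc_range x ltac:(lra)). unfold midpoint. lra.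
  - intros x Hx. rewrite Rmin_left, Rmax_right in Hx by lra. split.
    + rewrite <- (Rplus_0_l (scale * arcsin_p_deriv p x)).
      apply is_derive_Reals, (derivable_pt_lim_plus (fun _ => c0) arc);
        [apply derivable_pt_lim_const|apply is_derive_Reals, arc_is_derive; lra].
    + apply continuity_pt_continuous, continuity_pt_scal, arcsin_p_deriv_continuity_pt; auto; lra.
Qed.

Lemma RInt_profile_deriv x : c0 <= x <= midpoint -> RInt profile_deriv c0 x = profile (x - c0).
Proof.
  intros Hx. destruct midpoint_props as [M1 [M2 [M3 M4]]].
  destruct (profile_spec (x - c0)) as [Hr E]. rewrite clamp_id in E by lra.
  replace x with (c0 + arc (profile (x - c0))) at 1 by lra.
  rewrite RInt_change_var by (auto; intros; apply profile_deriv_continuity_pt).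
  transitivity (RInt (fun _ => 1) 0 (profile (x - c0))).
  - apply RInt_ext. intros y Hy. rewrite Rmin_left, Rmax_right in Hy by lra. unfold profile_deriv.
    replace (c0 + arc y - c0) with (arc y) by ring. rewrite profile_arc by lra.
    pose proof scale_pos. pose proof (arcsin_p_deriv_pos p Hp y ltac:(lra)).
    match goal with |- @eq _ ?l ?r => change (@eq R l r) end. field. split; lra.
  - rewrite RInt_const. unfold scal; simpl; unfold mult; simpl. ring.
Qed.

Lemma test_fun_left x : x <= midpoint -> test_fun x = profile (x - c0).
Proof.
  intros H. unfold test_fun. destruct midpoint_props as [_ [_ [M3 _]]].
  rewrite Rabs_left1 by lra. f_equal. lra.
Qed.

Lemma test_fun_right x : midpoint <= x -> test_fun x = profile (d0 - x).
Proof.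
  intros H. unfold test_fun. destruct midpoint_props as [_ [_ [_ M4]]].
  rewrite Rabs_right by lra. f_equal. lra.
Qed.

Lemma test_fun_reflect x : test_fun (c0 + d0 - x) = test_fun x.
Proof.
  unfold test_fun. destruct midpoint_props as [_ [M2 _]]. do 2 f_equal.
  replace (c0 + d0 - x - midpoint) with (- (x - midpoint)) by lra. apply Rabs_Ropp.
Qed.

Lemma test_deriv_left x : x <= midpoint -> test_deriv x = profile_deriv x.
Proof. intros H. unfold test_deriv. destruct Rle_dec; [auto|lra]. Qed.

Lemma test_deriv_right x : midpoint < x -> test_deriv x = - profile_deriv (c0 + d0 - x).
Proof. intros H. unfold test_deriv. destruct Rle_dec; [lra|auto]. Qed.

Lemma RInt_reflected_profile_deriv x : midpoint <= x <= d0 ->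
  RInt (fun s => - profile_deriv (c0 + d0 - s)) midpoint x = profile (d0 - x) - profile half.
Proof.
  intros Hx. destruct midpoint_props as [M1 [M2 [M3 M4]]].
  assert (Hex : ex_RInt (fun s => profile_deriv (c0 + d0 - s)) midpoint x)
    by (apply ex_RInt_continuity; intros; apply continuity_pt_reflect, profile_deriv_continuity_pt).
  assert (E0 : RInt (fun s => - profile_deriv (c0 + d0 - s)) midpoint x =
               - RInt (fun s => profile_deriv (c0 + d0 - s)) midpoint x).
  { etransitivity; [|apply (RInt_opp _ _ _ Hex)]. apply RInt_ext. reflexivity. }
  rewrite E0, RInt_reflect by apply profile_deriv_continuity_pt. rewrite M2.
  assert (Ch : RInt profile_deriv c0 midpoint =
               RInt profile_deriv c0 (c0 + d0 - x) + RInt profile_deriv (c0 + d0 - x) midpoint).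
  { rewrite <- (RInt_Chasles profile_deriv c0 (c0 + d0 - x) midpoint); [reflexivity| |];
      apply ex_RInt_continuity, profile_deriv_continuity_pt. }
  rewrite !RInt_profile_deriv in Ch by lra. rewrite M3 in Ch.
  replace (c0 + d0 - x - c0) with (d0 - x) in Ch by ring. lra.
Qed.

Lemma McShane_int_test_deriv x : c0 < x <= d0 -> McShane_int test_deriv c0 x (test_fun x).
Proof.
  intros Hx. destruct midpoint_props as [M1 [M2 [M3 M4]]].
  assert (Left : forall z, c0 < z <= midpoint -> McShane_int test_deriv c0 z (test_fun z)).
  { intros z Hz. rewrite test_fun_left, <- RInt_profile_deriv by lra.
    apply McShane_int_ext with profile_deriv; [apply McShane_int_RInt; [lra|intros; apply profile_deriv_continuity_pt]|].
    intros t Ht. rewrite test_deriv_left; auto; lra. }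
  destruct (Rle_or_lt x midpoint); [apply Left; lra|].
  rewrite test_fun_right by lra.
  replace (profile (d0 - x)) with (profile half + (profile (d0 - x) - profile half)) by ring.
  apply McShane_int_chasles with midpoint.
  - rewrite <- M3, <- test_fun_left by lra. apply Left; lra.
  - rewrite <- RInt_reflected_profile_deriv by lra.
    apply McShane_int_change_point with (fun s => - profile_deriv (c0 + d0 - s)) midpoint.
    + apply McShane_int_RInt; [lra|]. intros; apply continuity_pt_opp, continuity_pt_reflect, profile_deriv_continuity_pt.
    + intros t Ht Hne. rewrite test_deriv_right; auto; lra.
Qed.

Lemma McShane_int_symmetric (h F : R -> R) : (forall x, continuity_pt h x) ->
  (forall s, c0 <= s <= midpoint -> F s = h s) ->
  (forall s, midpoint <= s <= d0 -> F s = h (c0 + d0 - s)) ->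
  McShane_int F c0 d0 (2 * RInt h c0 midpoint).
Proof.
  intros Hc HL HR. destruct midpoint_props as [M1 [M2 [M3 M4]]].
  replace (2 * RInt h c0 midpoint) with (RInt h c0 midpoint + RInt (fun s => h (c0 + d0 - s)) midpoint d0).
  - apply McShane_int_chasles with midpoint.
    + apply McShane_int_ext with h; [apply McShane_int_RInt; [lra|auto]|]. intros; rewrite HL; auto.
    + apply McShane_int_ext with (fun s => h (c0 + d0 - s)); [apply McShane_int_RInt; [lra|]|].
      * intros; apply continuity_pt_reflect; auto.
      * intros; rewrite HR; auto.
  - rewrite RInt_reflect by auto. rewrite M2. replace (c0 + d0 - d0) with c0 by ring. ring.
Qed.

Lemma test_fun_W0 : W0 p c0 d0 test_fun test_deriv.
Proof.
  destruct midpoint_props as [M1 [M2 [M3 M4]]].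
  split; [auto|split; [|split; [|split; [|split]]]].
  - intros N HN. set (tr := fun z => Rmax (- N) (Rmin N z)).
    assert (Htr : forall z, continuity_pt tr z).
    { intros z e He. exists e. split; auto. intros y [_ Hy]. simpl in *. unfold R_dist in *. unfold tr.
      unfold Rmax, Rmin; repeat destruct Rle_dec; unfold Rabs in *; repeat destruct Rcase_abs; lra. }
    exists (RInt (fun s => tr (profile_deriv s)) c0 midpoint
            + RInt (fun s => tr (- profile_deriv (c0 + d0 - s))) midpoint d0).
    apply McShane_int_chasles with midpoint.
    + apply McShane_int_ext with (fun s => tr (profile_deriv s)); [apply McShane_int_RInt; [lra|]|].
      * intros; apply continuity_pt_comp with (f2 := tr); auto. apply profile_deriv_continuity_pt.
      * intros t Ht. unfold tr. rewrite test_deriv_left; auto; lra.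
    + apply McShane_int_change_point with (fun s => tr (- profile_deriv (c0 + d0 - s))) midpoint;
        [apply McShane_int_RInt; [lra|]|].
      * intros; apply continuity_pt_comp with (f2 := tr); auto.
        apply continuity_pt_opp, continuity_pt_reflect, profile_deriv_continuity_pt.
      * intros t Ht Hne. unfold tr. rewrite test_deriv_right; auto; lra.
  - exists (2 * RInt (fun s => pw (Rabs (profile_deriv s)) p) c0 midpoint).
    apply McShane_int_symmetric.
    + intros x. apply continuity_pt_comp with (f2 := fun z => pw (Rabs z) p);
        [apply profile_deriv_continuity_pt|apply pw_abs_continuity_pt; lra].
    + intros s Hs. rewrite test_deriv_left; auto; lra.
    + intros s Hs. destruct (Req_dec s midpoint) as [->|E].
      * rewrite M2, test_deriv_left; auto; lra.
      * rewrite test_deriv_right, Rabs_Ropp by lra. auto.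
  - rewrite test_fun_left, Rminus_diag by lra. apply profile_0.
  - apply McShane_int_test_deriv.
  - rewrite test_fun_right, Rminus_diag by lra. apply profile_0.
Qed.

Lemma test_fun_nontrivial : nontrivial_on c0 d0 test_fun.
Proof.
  destruct midpoint_props as [M1 [M2 [M3 M4]]].
  exists midpoint. split; [lra|]. rewrite test_fun_left, M3, <- arc_Y, profile_arc by lra. lra.
Qed.

Lemma test_fun_energy : McShane_int (fun x => pw (Rabs (test_deriv x)) p) c0 d0
  (2 * (Rpower scale (1 - p) * energy_integral p Y)).
Proof.
  destruct midpoint_props as [M1 [M2 [M3 M4]]].
  set (h := fun s => pw (Rabs (profile_deriv s)) p).
  assert (Hh : forall x, continuity_pt h x).
  { intros x. apply continuity_pt_comp with (f2 := fun z => pw (Rabs z) p);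
      [apply profile_deriv_continuity_pt|apply pw_abs_continuity_pt; lra]. }
  replace (Rpower scale (1 - p) * energy_integral p Y) with (RInt h c0 midpoint).
  - apply McShane_int_symmetric; auto.
    + intros s Hs. unfold h. rewrite test_deriv_left; auto; lra.
    + intros s Hs. unfold h. destruct (Req_dec s midpoint) as [->|E].
      * rewrite M2, test_deriv_left; auto; lra.
      * rewrite test_deriv_right, Rabs_Ropp by lra. auto.
  - replace midpoint with (c0 + arc Y) by (rewrite arc_Y; unfold midpoint; ring).
    rewrite RInt_change_var by (auto; lra). unfold energy_integral.
    rewrite <- (RInt_scal (fun y => (1 - pw y p) * arcsin_p_deriv p y)) by (apply ex_RInt_energy; auto).
    apply RInt_ext. intros y Hy. rewrite Rmin_left, Rmax_right in Hy by lra.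
    unfold h, profile_deriv, scal; simpl; unfold mult; simpl.
    replace (c0 + arc y - c0) with (arc y) by ring. rewrite profile_arc by lra.
    pose proof scale_pos. pose proof (arcsin_p_deriv_pos p Hp y ltac:(lra)).
    rewrite Rabs_right by (apply Rle_ge, Rlt_le, Rinv_0_lt_compat; nra).
    apply energy_integrand_eq; auto; lra.
Qed.

Lemma test_fun_mass : McShane_int (fun x => pw (Rabs (test_fun x)) p) c0 d0
  (2 * (scale * mass_integral p Y)).
Proof.
  destruct midpoint_props as [M1 [M2 [M3 M4]]].
  set (h := fun s => pw (Rabs (test_fun s)) p).
  assert (Hh : forall x, continuity_pt h x).
  { intros x. apply continuity_pt_comp with (f2 := fun z => pw (Rabs z) p);
      [apply test_fun_continuity_pt|apply pw_abs_continuity_pt; lra]. }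
  replace (scale * mass_integral p Y) with (RInt h c0 midpoint).
  - apply McShane_int_symmetric; auto. intros s Hs. unfold h. rewrite test_fun_reflect. auto.
  - replace midpoint with (c0 + arc Y) by (rewrite arc_Y; unfold midpoint; ring).
    rewrite RInt_change_var by (auto; lra). unfold mass_integral.
    rewrite <- (RInt_scal (fun y => arcsin_p_deriv p y * pw y p)) by (apply ex_RInt_mass; auto).
    apply RInt_ext. intros y Hy. rewrite Rmin_left, Rmax_right in Hy by lra.
    pose proof (arc_range y ltac:(lra)). unfold h, scal; simpl; unfold mult; simpl.
    rewrite test_fun_left by (unfold midpoint; lra).
    replace (c0 + arc y - c0) with (arc y) by ring. rewrite profile_arc, Rabs_right by lra. ring.
Qed.

(* By integration by parts the energy is [(p - 1)] times the mass up to the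
   boundary term [Y * mu], which is negligible once [mu] is small; and
   [scale^(-p) = (2 arcsin_p Y / (d0 - c0))^p <= (2 J / (d0 - c0))^p]. *)
Lemma test_fun_quotient_le J eps : McShane_int (arcsin_p_deriv p) 0 1 J -> 0 < eps ->
  Rpower (1 - pw Y p) ((p - 1) / p) <= Rmin (1 / 2) (eps / (2 * p * Rpower (2 * J / (d0 - c0)) p)) ->
  0 < mass_integral p Y /\
  Rpower scale (1 - p) * energy_integral p Y <=
    ((p - 1) * Rpower (2 * J / (d0 - c0)) p + eps) * (scale * mass_integral p Y).
Proof.
  intros HJ He Hmu.
  set (mu := Rpower (1 - pw Y p) ((p - 1) / p)) in Hmu.
  set (l := d0 - c0) in *. set (K := Rpower (2 * J / l) p) in *.
  set (N := energy_integral p Y). set (D := mass_integral p Y).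
  assert (Hmu0 : 0 < mu) by apply Rpower_pos.
  assert (HK : 0 < K) by apply Rpower_pos.
  assert (Hmu1 : mu <= 1 / 2) by (pose proof (Rmin_l (1 / 2) (eps / (2 * p * K))); lra).
  assert (Hmu2 : mu <= eps / (2 * p * K)) by (pose proof (Rmin_r (1 / 2) (eps / (2 * p * K))); lra).
  assert (HFY : Y <= arcsin_p p Y) by apply le_arcsin_p.
  assert (HFJ : arcsin_p p Y <= J) by (apply arcsin_p_le_integral; auto).
  assert (S1 : N + D = arcsin_p p Y) by (apply energy_plus_mass; auto).
  assert (S2 : N = (p - 1) * D + Y * mu) by (pose proof (energy_minus_mass p Y Hp HY0 HY1); unfold N, D, mu; lra).
  assert (HD : Y / (2 * p) <= D).
  { apply Rmult_le_reg_l with (2 * p); [lra|].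
    replace (2 * p * (Y / (2 * p))) with Y by (field; lra). nra. }
  assert (HD0 : 0 < D) by (apply Rlt_le_trans with (Y / (2 * p)); auto; apply Rdiv_lt_0_compat; lra).
  pose proof scale_pos as Hs.
  assert (Epow : Rpower scale (1 - p) = scale * Rpower (2 * arcsin_p p Y / l) p).
  { replace (1 - p) with (1 + - p) by ring. rewrite Rpower_plus, Rpower_1, Rpower_Ropp by auto.
    f_equal. rewrite <- Rpower_inv by auto. f_equal. unfold scale, l. field. lra. }
  assert (HKY : Rpower (2 * arcsin_p p Y / l) p <= K).
  { apply Rle_Rpower_l; [lra|]. unfold l. split; [apply Rdiv_lt_0_compat; lra|].
    apply Rmult_le_compat_r; [apply Rlt_le, Rinv_0_lt_compat; lra|lra]. }
  split; auto. rewrite Epow, S2.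
  assert (T : Rpower (2 * arcsin_p p Y / l) p * (Y * mu) <= eps * D).
  { apply Rle_trans with (K * (Y * (eps / (2 * p * K)))).
    - apply Rmult_le_compat; try nra. apply Rlt_le, Rpower_pos.
    - replace (K * (Y * (eps / (2 * p * K)))) with (eps * (Y / (2 * p))) by (field; lra).
      apply Rmult_le_compat_l; lra. }
  assert (T2 : Rpower (2 * arcsin_p p Y / l) p * ((p - 1) * D) <= K * ((p - 1) * D))
    by (apply Rmult_le_compat_r; nra).
  replace (((p - 1) * K + eps) * (scale * D)) with (scale * (K * ((p - 1) * D) + eps * D)) by ring.
  rewrite Rmult_assoc. apply Rmult_le_compat_l; lra.
Qed.

End TestFunction.

(** * Upper bounds for first eigenvalues *)

Lemma exists_truncation_level p mu : 1 < p -> 0 < mu < 1 ->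
  exists Y, 0 < Y < 1 /\ Rpower (1 - pw Y p) ((p - 1) / p) = mu.
Proof.
  intros Hp Hmu. set (q := (p - 1) / p). assert (Hq : 0 < q) by (unfold q; apply Rdiv_lt_0_compat; lra).
  set (z := Rpower mu (/ q)).
  assert (Hz0 : 0 < z) by apply Rpower_pos.
  assert (Hz1 : z < 1).
  { unfold z. apply Rlt_le_trans with (Rpower 1 (/ q)); [|rewrite Rpower_1_base; lra].
    apply Rlt_Rpower_l; [apply Rinv_0_lt_compat|]; lra. }
  exists (Rpower (1 - z) (1 / p)). split.
  - split; [apply Rpower_pos|]. apply Rlt_le_trans with (Rpower 1 (1 / p)); [|rewrite Rpower_1_base; lra].
    apply Rlt_Rpower_l; [apply Rdiv_lt_0_compat|]; lra.
  - rewrite pw_pos, Rpower_mult by apply Rpower_pos. replace (1 / p * p) with 1 by (field; lra).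
    rewrite Rpower_1 by lra. replace (1 - (1 - z)) with z by ring. unfold z. rewrite Rpower_mult.
    replace (/ q * q) with 1 by (field; lra). apply Rpower_1; lra.
Qed.

Lemma arcsin_p_integral_pos p J : 1 < p -> McShane_int (arcsin_p_deriv p) 0 1 J -> 0 < J.
Proof.
  intros Hp HJ. pose proof (arcsin_p_le_integral p J (1 / 2) Hp HJ ltac:(lra)).
  pose proof (arcsin_p_increment_ge p Hp 0 (1 / 2) ltac:(lra) ltac:(lra)). rewrite arcsin_p_0 in *. lra.
Qed.

Lemma pi_p_pos p PI : 1 < p -> is_pi_p p PI -> 0 < PI.
Proof.
  intros Hp [J [HJ ->]]. pose proof (arcsin_p_integral_pos p J Hp HJ).
  pose proof (Rpower_pos (p - 1) (1 / p)). nra.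
Qed.

Lemma exists_test_function p c0 d0 PI eps : 1 < p -> c0 < d0 -> is_pi_p p PI -> 0 < eps ->
  exists v g A B, W0 p c0 d0 v g /\ nontrivial_on c0 d0 v /\ (forall x, continuity_pt v x) /\
    McShane_int (fun x => pw (Rabs (g x)) p) c0 d0 A /\
    McShane_int (fun x => pw (Rabs (v x)) p) c0 d0 B /\
    0 < B /\ A <= (Rpower (PI / (d0 - c0)) p + eps) * B.
Proof.
  intros Hp Hcd [J [HJ EPI]] He.
  set (K := Rpower (2 * J / (d0 - c0)) p).
  assert (HK : 0 < K) by apply Rpower_pos.
  set (mu := Rmin (1 / 2) (eps / (2 * p * K))).
  assert (Hmu : 0 < mu < 1).
  { pose proof (Rmin_l (1 / 2) (eps / (2 * p * K))) as Hm. fold mu in Hm.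
    split; [|lra]. apply Rmin_glb_lt; [lra|]. apply Rdiv_lt_0_compat; [lra|].
    apply Rmult_lt_0_compat; lra. }
  destruct (exists_truncation_level p mu Hp Hmu) as [Y [[HY0 HY1] EY]].
  destruct (test_fun_quotient_le p Y c0 d0 Hp HY0 HY1 Hcd J eps HJ He)
    as [HD Hquot]; [rewrite EY; apply Rle_refl|].
  exists (test_fun p Y c0 d0 Hp HY0 HY1 Hcd), (test_deriv p Y c0 d0 Hp HY0 HY1 Hcd).
  eexists. eexists. split; [apply test_fun_W0|].
  split; [apply test_fun_nontrivial|].
  split; [intros; apply test_fun_continuity_pt|].
  split; [apply test_fun_energy|].
  split; [apply test_fun_mass|].
  pose proof (scale_pos p Y c0 d0 Hp HY0 HY1 Hcd).
  split; [nra|].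
  assert (EK : Rpower (PI / (d0 - c0)) p = (p - 1) * K).
  { unfold K. rewrite EPI. replace (2 * Rpower (p - 1) (1 / p) * J / (d0 - c0))
      with (Rpower (p - 1) (1 / p) * (2 * J / (d0 - c0))) by (field; lra).
    assert (HJ0 : 0 < 2 * J / (d0 - c0)).
    { apply Rdiv_lt_0_compat; [|lra]. pose proof (arcsin_p_integral_pos p J Hp HJ). lra. }
    rewrite <- Rpower_mult_distr, Rpower_mult by (auto; apply Rpower_pos).
    replace (1 / p * p) with 1 by (field; lra). rewrite Rpower_1 by lra. reflexivity. }
  rewrite EK. fold K in Hquot. lra.
Qed.

Lemma RQ_nonneg p r c0 d0 q : (forall x, c0 < x < d0 -> 0 <= r x) -> RQ p r c0 d0 q -> 0 <= q.
Proof.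
  intros Hr [v [g [A [B [HW [_ [HA [HB ->]]]]]]]].
  destruct HW as [_ [_ [_ [Hvc [_ Hvd]]]]].
  assert (A0 : 0 <= A) by (apply McShane_int_ge0 with (1 := HA); intros; apply pw_nonneg).
  assert (B0 : 0 <= B).
  { apply McShane_int_ge0 with (1 := HB). intros t Ht.
    destruct (Req_dec t c0) as [->|N1]; [rewrite Hvc, Rabs_R0, pw_0; lra|].
    destruct (Req_dec t d0) as [->|N2]; [rewrite Hvd, Rabs_R0, pw_0; lra|].
    apply Rmult_le_pos; [apply Hr; lra|apply pw_nonneg]. }
  destruct (Req_dec B 0) as [->|NB]; [unfold Rdiv; rewrite Rinv_0, Rmult_0_r; lra|].
  apply Rmult_le_pos; auto. apply Rlt_le, Rinv_0_lt_compat. lra.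
Qed.

Lemma lambda1_nonneg p r c0 d0 L : (forall x, c0 < x < d0 -> 0 <= r x) ->
  is_lambda1 p r c0 d0 L -> 0 <= L.
Proof. intros Hr [_ H]. apply H. intros q Hq. eapply RQ_nonneg; eauto. Qed.

Section WeightedEigenvalue.
Variables (p a b thm thp PI : R) (r : R -> R).
Hypothesis Hp : 1 < p.
Hypothesis Hr : measurable_on r a b.
Hypothesis Hthm : 0 < thm.
Hypothesis Hrb : forall x, a < x < b -> thm <= r x <= thp.
Hypothesis HPI : is_pi_p p PI.

(* The weight is integrable against [|v|^p] because its truncation at [thp] is
   integrable and coincides with it inside [(a, b)]. *)
Lemma weighted_rayleigh_le c0 d0 eps : a <= c0 -> c0 < d0 -> d0 <= b -> 0 < eps ->
  exists q, RQ p r c0 d0 q /\ q <= (Rpower (PI / (d0 - c0)) p + eps) / thm.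
Proof.
  intros H1 H2 H3 He.
  assert (Hthp : thm <= thp) by (destruct (Hrb (c0 + (d0 - c0) / 2)); lra).
  destruct (exists_test_function p c0 d0 PI eps Hp H2 HPI He)
    as [v [g [A [B1 [HW [Hnt [Hc [HA [HB1 [HB0 HAB]]]]]]]]]].
  pose proof HW as [_ [_ [_ [Hvc [_ Hvd]]]]].
  assert (Hvt : forall t, c0 <= t <= d0 -> c0 < t < d0 \/ pw (Rabs (v t)) p = 0).
  { intros t Ht. destruct (Req_dec t c0) as [->|N1]; [right; rewrite Hvc, Rabs_R0; apply pw_0|].
    destruct (Req_dec t d0) as [->|N2]; [right; rewrite Hvd, Rabs_R0; apply pw_0|]. left; lra. }
  set (rt := fun x => Rmax (- thp) (Rmin thp (r x))).
  destruct (Hr thp ltac:(lra)) as [I HI].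
  destruct (integrable_sub _ _ _ _ c0 d0 HI H1 H2 H3) as [I' HI'].
  destruct (integrable_mul_continuous rt (fun x => pw (Rabs (v x)) p) c0 d0 I' thp HI') as [Br HBr].
  { intros t _. unfold rt, Rmax, Rmin. repeat destruct Rle_dec; unfold Rabs; destruct Rcase_abs; lra. }
  { intros t _. apply continuity_pt_comp with (f2 := fun z => pw (Rabs z) p); auto.
    apply pw_abs_continuity_pt; lra. }
  assert (HBr' : McShane_int (fun x => r x * pw (Rabs (v x)) p) c0 d0 Br).
  { apply McShane_int_ext with (1 := HBr). intros t Ht. destruct (Hvt t Ht) as [Hin| ->]; [|ring].
    f_equal. destruct (Hrb t ltac:(lra)). unfold rt, Rmax, Rmin. repeat destruct Rle_dec; lra. }
  assert (Hmono : thm * B1 <= Br).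
  { apply McShane_int_le with (1 := McShane_int_scal thm _ _ _ _ HB1) (2 := HBr'). intros t Ht.
    destruct (Hvt t Ht) as [Hin| ->]; [|lra].
    apply Rmult_le_compat_r; [apply pw_nonneg|]. destruct (Hrb t); lra. }
  assert (HBr0 : 0 < Br) by nra.
  assert (HA0 : 0 <= A) by (apply McShane_int_ge0 with (1 := HA); intros; apply pw_nonneg).
  exists (A / Br). split; [exists v, g, A, Br; split; [|split; [|split; [|split]]]; auto|].
  apply Rle_trans with (A / (thm * B1)).
  - apply Rmult_le_compat_l; auto. apply Rinv_le_contravar; nra.
  - replace (A / (thm * B1)) with ((A / B1) / thm) by (field; lra).
    apply Rmult_le_compat_r; [apply Rlt_le, Rinv_0_lt_compat; auto|].
    apply Rmult_le_reg_r with B1; auto. unfold Rdiv. rewrite Rmult_assoc, Rinv_l, Rmult_1_r; lra.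
Qed.

Lemma lambda1_exists c0 d0 : a <= c0 -> c0 < d0 -> d0 <= b -> exists L, is_lambda1 p r c0 d0 L.
Proof.
  intros H1 H2 H3.
  destruct (weighted_rayleigh_le c0 d0 1 H1 H2 H3 ltac:(lra)) as [q0 [Hq0 _]].
  set (E := fun y => RQ p r c0 d0 (- y)).
  assert (HE : bound E).
  { exists 0. intros y Hy. apply RQ_nonneg in Hy; [lra|]. intros x Hx. destruct (Hrb x); lra. }
  destruct (completeness E HE ltac:(exists (- q0); unfold E; rewrite Ropp_involutive; auto))
    as [m [Hub Hlub]].
  exists (- m). split.
  - intros q Hq. assert (- q <= m) by (apply Hub; unfold E; rewrite Ropp_involutive; auto). lra.
  - intros L' HL'. assert (m <= - L'); [apply Hlub; intros y Hy; specialize (HL' _ Hy); lra|lra].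
Qed.

Lemma lambda1_le c0 d0 L : a <= c0 -> c0 < d0 -> d0 <= b -> is_lambda1 p r c0 d0 L ->
  L <= Rpower (PI / (d0 - c0)) p / thm.
Proof.
  intros H1 H2 H3 [HL _]. set (K := Rpower (PI / (d0 - c0)) p).
  destruct (Rle_or_lt L (K / thm)) as [|Hlt]; auto. exfalso.
  set (eps := (L - K / thm) * thm / 2).
  assert (He : 0 < eps) by (unfold eps; apply Rmult_lt_0_compat; [apply Rmult_lt_0_compat|]; lra).
  destruct (weighted_rayleigh_le c0 d0 eps H1 H2 H3 He) as [q [Hq Hqb]].
  specialize (HL q Hq). fold K in Hqb.
  assert ((K + eps) / thm = K / thm + (L - K / thm) / 2) by (unfold eps; field; lra). lra.
Qed.

End WeightedEigenvalue.

(** * Bounds on the Fucik eigenvalue [c] *)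

Lemma partition_bounds k a b t : is_partition k a b t -> forall i, (i <= S k)%nat -> a <= t i <= b.
Proof.
  intros [H0 [HSk Hinc]].
  assert (Hmono : forall i j, (i <= j <= S k)%nat -> t i <= t j).
  { intros i j [Hij Hj]. induction Hij; [lra|]. specialize (Hinc m ltac:(lia)). specialize (IHHij ltac:(lia)). lra. }
  intros i Hi. rewrite <- H0, <- HSk. split; apply Hmono; lia.
Qed.

Lemma cw_coef_bounds sg s j : 0 < s -> 0 < cw_coef sg s j <= Rmax s 1.
Proof.
  intros Hs. unfold cw_coef. destruct (Bool.eqb (Nat.odd j) sg); split;
    [lra|apply Rmax_l|lra|apply Rmax_r].
Qed.

Lemma cw_weight_cases sg m n j : cw_weight sg m n j = m \/ cw_weight sg m n j = n.
Proof. unfold cw_weight. destruct (Bool.eqb (Nat.odd j) sg); auto. Qed.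

(* [Rmax_upto W n] is the maximum of [W 1, ..., W (n + 1)]. *)
Fixpoint Rmax_upto (W : nat -> R) (n : nat) : R :=
  match n with O => W 1%nat | S n' => Rmax (Rmax_upto W n') (W (S (S n'))) end.

Lemma Rmax_upto_spec W n : (forall j, (1 <= j <= S n)%nat -> W j <= Rmax_upto W n) /\
  exists j, (1 <= j <= S n)%nat /\ Rmax_upto W n = W j.
Proof.
  induction n as [|n [IH1 [j [Hj Ej]]]].
  - split; [intros j Hj; replace j with 1%nat by lia; simpl; lra|exists 1%nat; split; [lia|reflexivity]].
  - split.
    + intros i Hi. simpl. destruct (Nat.eq_dec i (S (S n))) as [->|Hne]; [apply Rmax_r|].
      eapply Rle_trans; [apply IH1; lia|apply Rmax_l].
    + simpl. unfold Rmax at 1. destruct Rle_dec; [exists (S (S n)); split; [lia|reflexivity]|].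
      exists j. split; [lia|auto].
Qed.

Lemma is_c_nonneg p sg s m n k a b c : 0 < s ->
  (forall x, a < x < b -> 0 <= m x /\ 0 <= n x) -> is_c p sg s m n k a b c -> 0 <= c.
Proof.
  intros Hs Hmn [_ Hc]. apply Hc. intros V [t [Ht [L [HL1 [_ [j [Hj ->]]]]]]].
  pose proof (partition_bounds k a b t Ht) as PB.
  destruct Ht as [_ [_ Hinc]]. pose proof (Hinc (pred j) ltac:(lia)) as Hj'.
  replace (S (pred j)) with j in Hj' by lia.
  apply Rmult_le_pos; [destruct (cw_coef_bounds sg s j Hs); lra|].
  apply lambda1_nonneg with p (cw_weight sg m n j) (t (pred j)) (t j); [|apply HL1; auto].
  intros x Hx. pose proof (PB (pred j) ltac:(lia)). pose proof (PB j ltac:(lia)).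
  destruct (Hmn x ltac:(lra)). destruct (cw_weight_cases sg m n j) as [-> | ->]; auto.
Qed.

Definition uniform_partition (k : nat) (a b : R) (i : nat) : R := a + INR i * ((b - a) / INR (S k)).

Lemma uniform_partition_spec k a b : a < b -> is_partition k a b (uniform_partition k a b) /\
  forall j, (1 <= j)%nat -> uniform_partition k a b j - uniform_partition k a b (pred j) = (b - a) / INR (S k).
Proof.
  intros Hab. assert (HSk : 0 < INR (S k)) by (apply lt_0_INR; lia).
  assert (Hl : 0 < (b - a) / INR (S k)) by (apply Rdiv_lt_0_compat; lra).
  unfold uniform_partition. split; [split; [simpl; ring|split; [field; lra|]]|];
    set (l := (b - a) / INR (S k)) in *.
  - intros i Hi. rewrite S_INR. lra.
  - intros j Hj. replace j with (S (pred j)) at 1 by lia. rewrite S_INR. ring.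
Qed.

Lemma lambda1_family p k a b t l thm thp PI (w : nat -> R -> R) : 1 < p -> 0 < thm -> is_pi_p p PI ->
  (forall j, measurable_on (w j) a b /\ forall x, a < x < b -> thm <= w j x <= thp) ->
  is_partition k a b t -> (forall j, (1 <= j)%nat -> t j - t (pred j) = l) ->
  exists L : nat -> R, forall j, (1 <= j <= S k)%nat ->
    is_lambda1 p (w j) (t (pred j)) (t j) (L j) /\ 0 <= L j <= Rpower (PI / l) p / thm.
Proof.
  intros Hp Hthm HPI Hw Ht Hlen. pose proof (partition_bounds k a b t Ht) as PB.
  assert (Hinc : forall j, (1 <= j <= S k)%nat -> t (pred j) < t j).
  { intros j Hj. destruct Ht as [_ [_ Hinc]]. replace j with (S (pred j)) at 2 by lia. apply Hinc. lia. }
  assert (HL : forall j, exists L, (1 <= j <= S k)%nat -> is_lambda1 p (w j) (t (pred j)) (t j) L).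
  { intros j. destruct (Compare_dec.le_dec 1 j); [destruct (Compare_dec.le_dec j (S k))|];
      [|exists 0; intros; lia|exists 0; intros; lia].
    destruct (Hw j) as [Hwm Hwb].
    destruct (lambda1_exists p a b thm thp PI (w j) Hp Hwm Hthm Hwb HPI (t (pred j)) (t j)) as [L HL];
      [apply PB; lia|apply Hinc; lia|apply PB; auto|].
    exists L; auto. }
  destruct (choice _ HL) as [L HLf]. exists L. intros j Hj.
  destruct (Hw j) as [Hwm Hwb]. specialize (Hlen j ltac:(lia)). specialize (HLf j Hj).
  pose proof (PB (pred j) ltac:(lia)). pose proof (PB j ltac:(lia)). pose proof (Hinc j Hj).
  split; [exact HLf|split].
  - apply lambda1_nonneg with p (w j) (t (pred j)) (t j); auto.
    intros x Hx. destruct (Hwb x ltac:(lra)). lra.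
  - rewrite <- Hlen. apply lambda1_le with a b thp (w j); auto; lra.
Qed.

(* Evaluate the definition of [c] on the partition into [k + 1] equal pieces. *)
Lemma is_c_le_uniform p sg s m n k a b c thm thp PI : a < b -> 1 < p ->
  measurable_on m a b -> measurable_on n a b -> 0 < thm ->
  (forall x, a < x < b -> thm <= m x <= thp /\ thm <= n x <= thp) -> 0 < s -> is_pi_p p PI ->
  is_c p sg s m n k a b c -> c <= Rmax s 1 * (Rpower (PI * INR (S k) / (b - a)) p / thm).
Proof.
  intros Hab Hp Hm Hn Hthm Hmn Hs HPI [Hc _].
  set (co := cw_coef sg s).
  destruct (uniform_partition_spec k a b Hab) as [Ht Hlen].
  assert (Hw : forall j, measurable_on (cw_weight sg m n j) a b /\
                         forall x, a < x < b -> thm <= cw_weight sg m n j x <= thp).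
  { intros j. destruct (cw_weight_cases sg m n j) as [-> | ->]; split; auto; intros x Hx; apply Hmn; auto. }
  destruct (lambda1_family p k a b _ _ thm thp PI _ Hp Hthm HPI Hw Ht Hlen) as [L HL].
  destruct (Rmax_upto_spec (fun j => co j * L j) k) as [Hv1 [j0 [Hj0 Ev]]].
  replace (PI * INR (S k) / (b - a)) with (PI / ((b - a) / INR (S k)))
    by (assert (0 < INR (S k)) by (apply lt_0_INR; lia); field; lra).
  apply Rle_trans with (Rmax_upto (fun j => co j * L j) k).
  - apply Hc. exists (uniform_partition k a b). split; auto. exists L. split; [|split].
    + intros j Hj. apply HL; auto.
    + intros j Hj. apply Hv1; auto.
    + exists j0. split; auto.
  - rewrite Ev. destruct (cw_coef_bounds sg s j0 Hs). destruct (HL j0 Hj0) as [_ ?].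
    apply Rmult_le_compat; unfold co; lra.
Qed.

(** * First eigenvalues of nodal domains *)

Lemma fucik_rhs_mul_le_pos p al be mx nx ux thp : 0 < ux -> 0 <= al -> 0 <= mx <= thp ->
  (al * mx * pw (pos_part ux) (p - 1) - be * nx * pw (neg_part ux) (p - 1)) * ux <=
  thp * al * pw (Rabs ux) p.
Proof.
  intros Hu Hal Hm. unfold pos_part, neg_part.
  rewrite Rmax_left, (Rmax_right (- ux)), pw_0, Rabs_right by lra.
  replace ((al * mx * pw ux (p - 1) - be * nx * 0) * ux) with (al * mx * (pw ux (p - 1) * ux)) by ring.
  rewrite pw_minus_1_mul by lra. pose proof (pw_nonneg ux p).
  apply Rmult_le_compat_r; [lra|]. rewrite (Rmult_comm thp). apply Rmult_le_compat_l; lra.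
Qed.

Lemma fucik_rhs_mul_le_neg p al be mx nx ux thp : ux < 0 -> 0 <= be -> 0 <= nx <= thp ->
  (al * mx * pw (pos_part ux) (p - 1) - be * nx * pw (neg_part ux) (p - 1)) * ux <=
  thp * be * pw (Rabs ux) p.
Proof.
  intros Hu Hbe Hn. unfold pos_part, neg_part.
  rewrite Rmax_right, (Rmax_left (- ux)), pw_0, Rabs_left by lra.
  replace ((al * mx * 0 - be * nx * pw (- ux) (p - 1)) * ux) with (be * nx * (pw (- ux) (p - 1) * - ux))
    by ring.
  rewrite pw_minus_1_mul by lra. pose proof (pw_nonneg (- ux) p).
  apply Rmult_le_compat_r; [lra|]. rewrite (Rmult_comm thp). apply Rmult_le_compat_l; lra.
Qed.

Section NodalEigenvalues.
Variables (p al be thp a b : R) (m n u g : R -> R).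
Hypothesis Hp : 1 < p.
Hypothesis Hmn : forall x, a < x < b -> 0 <= m x <= thp /\ 0 <= n x <= thp.
Hypothesis Hsol : weak_solution p al be m n a b u g.

Lemma pos_nodal_mu1_le c d : 0 <= al -> pos_nodal a b u c d -> forall L, is_mu1 p c d L -> L <= thp * al.
Proof.
  intros Hal Hnod. destruct Hsol as [HW Hweak].
  destruct (pos_nodal_endpoints p a b u g c d HW Hnod) as [Ec Ed].
  destruct Hnod as [H1 [H2 [H3 [Hin _]]]].
  assert (Hthp : 0 <= thp) by (destruct (Hmn ((c + d) / 2) ltac:(lra)) as [[? ?] _]; lra).
  apply mu1_le_of_nodal_domain with a b u g (fun x => al * m x * pw (pos_part (u x)) (p - 1)
                                                     - be * n x * pw (neg_part (u x)) (p - 1)); auto.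
  - exists ((c + d) / 2). split; [lra|]. specialize (Hin ((c + d) / 2) ltac:(lra)). lra.
  - apply Rmult_le_pos; lra.
  - intros x Hx. destruct (Hmn x ltac:(lra)) as [Hm _]. apply fucik_rhs_mul_le_pos; auto.
Qed.

Lemma neg_nodal_mu1_le c d : 0 <= be -> neg_nodal a b u c d -> forall L, is_mu1 p c d L -> L <= thp * be.
Proof.
  intros Hbe Hnod. destruct Hsol as [HW Hweak].
  destruct (neg_nodal_endpoints p a b u g c d HW Hnod) as [Ec Ed].
  destruct Hnod as [H1 [H2 [H3 [Hin _]]]].
  assert (Hthp : 0 <= thp) by (destruct (Hmn ((c + d) / 2) ltac:(lra)) as [_ [? ?]]; lra).
  apply mu1_le_of_nodal_domain with a b u g (fun x => al * m x * pw (pos_part (u x)) (p - 1)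
                                                     - be * n x * pw (neg_part (u x)) (p - 1)); auto.
  - exists ((c + d) / 2). split; [lra|]. specialize (Hin ((c + d) / 2) ltac:(lra)). lra.
  - apply Rmult_le_pos; lra.
  - intros x Hx. destruct (Hmn x ltac:(lra)) as [_ Hn]. apply fucik_rhs_mul_le_neg; auto.
Qed.

End NodalEigenvalues.

Lemma Rpower_mult_div_distr x y z e : 0 < x -> 0 < y -> 0 < z ->
  Rpower x e * Rpower y e * Rpower z (- e) = Rpower (x * y / z) e.
Proof.
  intros Hx Hy Hz. unfold Rdiv.
  rewrite <- !Rpower_mult_distr, Rpower_Ropp, Rpower_inv; auto.
  - apply Rmult_lt_0_compat; auto.
  - apply Rinv_0_lt_compat; auto.
Qed.

Lemma Rmax_1_gamma s : 0 < s -> Rmax s 1 = s * gamma s.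
Proof. intros Hs. unfold gamma, Rmax. destruct (Rle_dec 1 s); destruct (Rle_dec s 1); try field; lra. Qed.

Theorem lemma4p5 (a b p : R) (k : nat) (m n : R -> R) (thm thp : R)
  (sg : bool) (s c : R) (u g : R -> R)
  (cp dp cm dm : R) (PI : R) :
  a < b -> 1 < p -> (1 <= k)%nat ->
  measurable_on m a b -> measurable_on n a b ->
  0 < thm ->
  (forall x, a < x < b -> thm <= m x <= thp /\ thm <= n x <= thp) ->
  0 < s ->
  is_c p sg s m n k a b c ->
  weak_solution p (c / s) c m n a b u g ->
  nontrivial_on a b u ->
  pos_nodal a b u cp dp ->
  neg_nodal a b u cm dm ->
  is_pi_p p PI ->
  let C := thp / thm * (Rpower PI p * Rpower (INR (S k)) p * Rpower (b - a) (- p)) in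
  (forall L, is_mu1 p cp dp L -> L <= C * gamma s) /\
  (forall L, is_mu1 p cm dm L -> L <= C * s * gamma s).
Proof.
  intros Hab Hp _ Hm Hn Hthm Hmn Hs Hc Hsol _ Hpos Hneg HPI C.
  assert (Hmn0 : forall x, a < x < b -> 0 <= m x <= thp /\ 0 <= n x <= thp)
    by (intros x Hx; destruct (Hmn x Hx) as [[? ?] [? ?]]; lra).
  assert (Hthp : thm <= thp) by (destruct (Hmn ((a + b) / 2)) as [[? ?] _]; lra).
  set (K := Rpower (PI * INR (S k) / (b - a)) p).
  assert (HC : C = thp / thm * K).
  { unfold C, K. rewrite Rpower_mult_div_distr; auto; [apply pi_p_pos with p; auto|apply lt_0_INR; lia|lra]. }
  assert (Hc0 : 0 <= c) by (apply (is_c_nonneg p sg s m n k a b c); auto; intros x Hx; destruct (Hmn0 x Hx); lra).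
  assert (HcK : c <= s * gamma s * (K / thm))
    by (rewrite <- Rmax_1_gamma by auto; apply (is_c_le_uniform p sg s m n k a b c thm thp PI); auto).
  rewrite HC. split; intros L HL.
  - eapply Rle_trans; [apply (pos_nodal_mu1_le p (c / s) c thp a b m n u g Hp Hmn0 Hsol cp dp); auto|].
    + apply Rdiv_le_0_compat; lra.
    + replace (thp / thm * K * gamma s) with (thp * ((s * gamma s * (K / thm)) / s)) by (field; lra).
      apply Rmult_le_compat_l; [lra|]. apply Rmult_le_compat_r; [apply Rlt_le, Rinv_0_lt_compat|]; lra.
  - eapply Rle_trans; [apply (neg_nodal_mu1_le p (c / s) c thp a b m n u g Hp Hmn0 Hsol cm dm); auto|].
    replace (thp / thm * K * s * gamma s) with (thp * (s * gamma s * (K / thm))) by (field; lra).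
    apply Rmult_le_compat_l; lra.
Qed.
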